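(* Let $\mathsf S,\mathsf T$ be trees. A morphism $g:\overline{\mathsf S}\to\overline{\mathsf T}$ in $\mathbf{Tree}$ is generic with respect to the free-monad monad $F$ on $\mathbf{PolyEnd}$ if and only if it is boundary preserving. More precisely: every boundary-preserving morphism between free monads on trees is generic; and if $\mathsf S$ is a tree and $g:\overline{\mathsf S}\to\overline{\mathsf R}$ is generic for a polynomial endofunctor $\mathsf R$, then $\mathsf R$ is (isomorphic to) a tree and $g$ is boundary preserving.
   Context: A polynomial endofunctor is a diagram of sets $P_0\xleftarrow{s}P_2\xrightarrow{p}P_1\xrightarrow{t}P_0$ with $p$ having finite fibres; a morphism is a triple of maps commuting with $s,p,t$ whose middle square is a pullback; these form $\mathbf{PolyEnd}$. $F(\mathsf P)=\overline{\mathsf P}$ denotes the free polynomial monad on $\mathsf P$ (left adjoint to the forgetful functor from polynomial monads). A tree is a polynomial endofunctor with all sets finite, $t$ injective, $s$ injective with singleton complement (the root), and such that iterating $\sigma$ ($\sigma(\mathrm{root})=\mathrm{root}$, $\sigma(e)=t(p(e))$ for $e\in T_2$) brings every edge to the root. For a tree, $\overline{\mathsf T}=(T_0\leftarrow\mathrm{sub}'(\mathsf T)\to\mathrm{sub}(\mathsf T)\to T_0)$ with $\mathrm{sub}$ the set of subtrees and $\mathrm{sub}'$ subtrees with a marked leaf. $\mathbf{Tree}$: objects trees, morphisms monad morphisms $\overline{\mathsf S}\to\overline{\mathsf T}$; these correspond by adjunction to morphisms $\mathsf S\to F\mathsf T$ in $\mathbf{PolyEnd}$. A morphism $g:A\to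 FB$ is generic if for all $a:A\to FC$, $c:C\to D$, $b:B\to D$ with $F(c)\circ a=F(b)\circ g$ there is a unique $u:B\to C$ with $c\circ u=b$ and $F(u)\circ g=a$; a monad map $FA\to FB$ is generic if its adjunct $A\to FB$ is. A morphism $\overline{\mathsf S}\to\overline{\mathsf T}$ is boundary preserving if it sends the maximal subtree $\mathsf S$ to the maximal subtree $\mathsf T$. *)

From Stdlib Require Import List Relations ClassicalEpsilon.
Import ListNotations.
Set Implicit Arguments.

(** A polynomial endofunctor  P0 <-s- P2 -p-> P1 -t-> P0  (sets = types). *)
Record PolyEnd : Type := mkPoly {
  P0 : Type; P1 : Type; P2 : Type;
  ps : P2 -> P0; pp : P2 -> P1; pt : P1 -> P0 }.

(** [p] has finite fibres (objects of PolyEnd are required to satisfy this). *)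
Definition finitary (P : PolyEnd) : Prop :=
  forall b : P1 P, exists l : list (P2 P), forall e, pp P e = b -> In e l.

(** Morphisms of PolyEnd: commuting triple whose middle square is a pullback. *)
Record Hom (A B : PolyEnd) : Type := mkHom {
  h0 : P0 A -> P0 B; h1 : P1 A -> P1 B; h2 : P2 A -> P2 B;
  h_s : forall e, ps B (h2 e) = h0 (ps A e);
  h_p : forall e, pp B (h2 e) = h1 (pp A e);
  h_t : forall b, pt B (h1 b) = h0 (pt A b);
  h_pb : forall (b : P1 A) (e' : P2 B), pp B e' = h1 b ->
           exists! e : P2 A, pp A e = b /\ h2 e = e' }.

Definition fibre (P : PolyEnd) (b : P1 P) := { e : P2 P | pp P e = b }.

Inductive ptree (P : PolyEnd) : Type :=
| PLeaf : P0 P -> ptree P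
| PNode : forall b : P1 P, (fibre P b -> ptree P) -> ptree P.
Arguments PLeaf {P}.
Arguments PNode {P}.

Definition rc (P : PolyEnd) (tau : ptree P) : P0 P :=
  match tau with PLeaf c => c | PNode b _ => pt P b end.

Fixpoint wc (P : PolyEnd) (tau : ptree P) : Prop :=
  match tau with
  | PLeaf _ => True
  | PNode b ch => forall e : fibre P b, rc (ch e) = ps P (proj1_sig e) /\ wc (ch e)
  end.

(** leaves of a P-tree, given by their address (list of input edges from the root) *)
Fixpoint is_leaf (P : PolyEnd) (tau : ptree P) (l : list (P2 P)) : Prop :=
  match tau, l with
  | PLeaf _, [] => True
  | PNode b ch, e :: l' => exists h : pp P e = b, is_leaf (ch (exist _ e h)) l'
  | _, _ => False
  end.

Definition leafc (P : PolyEnd) (tau : ptree P) (l : list (P2 P)) : P0 P :=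
  match rev l with [] => rc tau | e :: _ => ps P e end.

(** The free polynomial monad  F(P) = (P0 <- trees with marked leaf -> trees -> P0). *)
Definition FP1 (P : PolyEnd) : Type := { tau : ptree P | wc tau }.
Definition FP2 (P : PolyEnd) : Type :=
  { x : FP1 P * list (P2 P) | is_leaf (proj1_sig (fst x)) (snd x) }.
Definition F (P : PolyEnd) : PolyEnd :=
  {| P0 := P0 P; P1 := FP1 P; P2 := FP2 P;
     ps := fun x => leafc (proj1_sig (fst (proj1_sig x))) (snd (proj1_sig x));
     pp := fun x => fst (proj1_sig x);
     pt := fun tau => rc (proj1_sig tau) |}.

(** The inverse of h2 on fibres given by the pullback condition. *)
Definition hinv (A B : PolyEnd) (c : Hom A B) (b : P1 A)
    (e' : fibre B (h1 c b)) : fibre A b :=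
  let X := constructive_indefinite_description _
             (h_pb c b (proj1_sig e') (proj2_sig e')) in
  exist _ (proj1_sig X) (proj1 (proj1 (proj2_sig X))).

Fixpoint fmapT (A B : PolyEnd) (c : Hom A B) (tau : ptree A) : ptree B :=
  match tau with
  | PLeaf x => PLeaf (h0 c x)
  | PNode b ch => PNode (h1 c b) (fun e' => fmapT c (ch (hinv c b e')))
  end.

Definition Fm1 (A B : PolyEnd) (c : Hom A B) (x : FP1 A) : ptree B :=
  fmapT c (proj1_sig x).
Definition Fm2 (A B : PolyEnd) (c : Hom A B) (x : FP2 A) : ptree B * list (P2 B) :=
  (fmapT c (proj1_sig (fst (proj1_sig x))), map (h2 c) (snd (proj1_sig x))).
Definition raw1 (A : PolyEnd) (x : FP1 A) : ptree A := proj1_sig x.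
Definition raw2 (A : PolyEnd) (x : FP2 A) : ptree A * list (P2 A) :=
  (proj1_sig (fst (proj1_sig x)), snd (proj1_sig x)).

(** F(c) o a = F(b) o g  for a : A -> F C, c : C -> D, g : A -> F B, b : B -> D *)
Definition Fcomp_eq (A B C D : PolyEnd) (c : Hom C D) (a : Hom A (F C))
    (b : Hom B D) (g : Hom A (F B)) : Prop :=
  (forall x, h0 c (h0 a x) = h0 b (h0 g x)) /\
  (forall x, Fm1 c (h1 a x) = Fm1 b (h1 g x)) /\
  (forall x, Fm2 c (h2 a x) = Fm2 b (h2 g x)).

(** F(u) o g = a  for g : A -> F B, u : B -> C, a : A -> F C *)
Definition Fcomp_eq1 (A B C : PolyEnd) (u : Hom B C) (g : Hom A (F B))
    (a : Hom A (F C)) : Prop :=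
  (forall x, h0 u (h0 g x) = h0 a x) /\
  (forall x, Fm1 u (h1 g x) = raw1 (h1 a x)) /\
  (forall x, Fm2 u (h2 g x) = raw2 (h2 a x)).

Definition comp_eq (B C D : PolyEnd) (c : Hom C D) (u : Hom B C) (b : Hom B D) : Prop :=
  (forall x, h0 c (h0 u x) = h0 b x) /\
  (forall x, h1 c (h1 u x) = h1 b x) /\
  (forall x, h2 c (h2 u x) = h2 b x).

Definition hom_eq (B C : PolyEnd) (u v : Hom B C) : Prop :=
  (forall x, h0 u x = h0 v x) /\ (forall x, h1 u x = h1 v x) /\
  (forall x, h2 u x = h2 v x).

(** Genericity of g : A -> F B (w.r.t. F), quantifying over objects C, D
    of PolyEnd (finitary polynomial endofunctors). *)
Definition generic (A B : PolyEnd) (g : Hom A (F B)) : Prop :=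
  forall (C D : PolyEnd), finitary C -> finitary D ->
  forall (a : Hom A (F C)) (c : Hom C D) (b : Hom B D),
    Fcomp_eq c a b g ->
    exists u : Hom B C, comp_eq c u b /\ Fcomp_eq1 u g a /\
      forall u' : Hom B C, comp_eq c u' b -> Fcomp_eq1 u' g a -> hom_eq u' u.

Definition finite_type (X : Type) : Prop := exists l : list X, forall x, In x l.

Definition is_root (P : PolyEnd) (r : P0 P) : Prop := ~ exists e, ps P e = r.

Definition sigma_step (P : PolyEnd) (x y : P0 P) : Prop :=
  exists e, ps P e = x /\ y = pt P (pp P e).

Definition is_tree (P : PolyEnd) : Prop :=
  finite_type (P0 P) /\ finite_type (P1 P) /\ finite_type (P2 P) /\
  (forall b b', pt P b = pt P b' -> b = b') /\
  (forall e e', ps P e = ps P e' -> e = e') /\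
  (exists r, is_root P r /\ forall x, is_root P x -> x = r) /\
  (forall x r, is_root P r -> clos_refl_trans _ (@sigma_step P) x r).

(** Monad multiplication / Kleisli extension: grafting. *)
Fixpoint subst (P : PolyEnd) (tau : ptree P) (f : list (P2 P) -> ptree P) : ptree P :=
  match tau with
  | PLeaf _ => f []
  | PNode b ch => PNode b (fun e => subst (ch e) (fun l => f (proj1_sig e :: l)))
  end.

(** The monad morphism  g^# : F S -> F T  adjunct to g : S -> F T, on trees. *)
Fixpoint ext (S T : PolyEnd) (g : Hom S (F T)) (tau : ptree S) : ptree T :=
  match tau with
  | PLeaf x => @PLeaf T (h0 g x)
  | PNode b ch =>
      subst (proj1_sig (h1 g b))
        (fun l =>
           match excluded_middle_informative
                   (exists e : fibre S b, snd (proj1_sig (h2 g (proj1_sig e))) = l) with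
           | left H => ext g (ch (proj1_sig (constructive_indefinite_description _ H)))
           | right _ => @PLeaf T (h0 g (pt S b))
           end)
  end.

Fixpoint node_in (P : PolyEnd) (b : P1 P) (tau : ptree P) : Prop :=
  match tau with
  | PLeaf _ => False
  | PNode b' ch => b' = b \/ exists e, node_in b (ch e)
  end.

Definition is_max_subtree (P : PolyEnd) (tau : ptree P) : Prop :=
  wc tau /\ is_root P (rc tau) /\ forall b : P1 P, node_in b tau.

Definition boundary_preserving (S T : PolyEnd) (g : Hom S (F T)) : Prop :=
  forall tau : ptree S, is_max_subtree tau -> is_max_subtree (ext g tau).

From Stdlib Require Import List Relations ClassicalEpsilon ProofIrrelevance FunctionalExtensionality Lia.
Import ListNotations.
Set Implicit Arguments. Unset Strict Implicit.

(** Every position in a raw tree is named by its address, the list of input edges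
    leading to it from the root, and a tree is determined by the labels found at its
    addresses; all constructions below are carried out on addresses.

    Let [S] be a tree.  Unfolding [S] from its root gives its maximal subtree [mu], in
    which every colour of [S] has exactly one address.  For [g : S -> F T] let [image]
    be the image [g^#(mu)] of the maximal subtree.  The addresses of [image] form a
    polynomial endofunctor [addr_poly image] with an etale projection
    [addr_proj : addr_poly image -> T], and [g] factors as [F(addr_proj) o canon] where
    [canon : S -> F (addr_poly image)] lifts each [g b] into [image].  The key fact is
    that [canon] is always generic: a commuting square [F c o a = F b o canon] is
    filled by transporting addresses of [image] to addresses of the tree [a^#(mu)].

    - If [g] is boundary preserving, [image] is the maximal subtree of the tree [T], so
      [addr_proj] is an isomorphism and [g], being isomorphic to [canon], is generic.
    - If [g] is generic, genericity applied to the square [F(addr_proj) o canon = g]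
      yields a section [u : R -> addr_poly image] of [addr_proj] with [F u o g = canon];
      then [u] is bijective, so [R] is a tree, and [image] contains every node of [R],
      i.e. [g] is boundary preserving. *)

(** [hinv] is defined by choice; keep it folded so that it is only handled through
    [hinv_spec] and [hinv_h2]. *)
Arguments hinv : simpl never.

Lemma sig_eq (X : Type) (Q : X -> Prop) (a b : {x | Q x}) : proj1_sig a = proj1_sig b -> a = b.
Proof. destruct a, b; simpl; intros ->; f_equal; apply proof_irrelevance. Qed.

Lemma app_len_inv (X : Type) (l1 l2 l3 l4 : list X) :
  l1 ++ l2 = l3 ++ l4 -> length l1 = length l3 -> l1 = l3 /\ l2 = l4.
Proof.
  revert l3; induction l1 as [|x l1 IH]; intros [|y l3]; simpl; try discriminate; auto.
  intros E L. injection E as -> E. injection L as L. destruct (IH _ E L). subst. auto.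
Qed.

Section Addresses.
Variable P : PolyEnd.

Fixpoint at_addr (t : ptree P) (l : list (P2 P)) (t' : ptree P) {struct l} : Prop :=
  match l with
  | [] => t' = t
  | e :: l' => match t with
               | PLeaf _ => False
               | PNode b ch => exists h : pp P e = b, at_addr (ch (exist _ e h)) l' t'
               end
  end.

Definition label (t : ptree P) : P0 P + P1 P :=
  match t with PLeaf x => inl x | PNode b _ => inr b end.

Lemma fib_eq b (e1 e2 : fibre P b) : proj1_sig e1 = proj1_sig e2 -> e1 = e2.
Proof. apply sig_eq. Qed.

Lemma at_addr_det t l t1 t2 : at_addr t l t1 -> at_addr t l t2 -> t1 = t2.
Proof.
  revert t; induction l as [|e l IH]; intros t; simpl.
  - intros H1 H2; rewrite H1, H2; reflexivity.
  - destruct t as [x|b ch]; [tauto|]. intros [h1 H1] [h2 H2].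
    assert (h1 = h2) by apply proof_irrelevance. subst. eauto.
Qed.

Lemma at_addr_app t l1 l2 t' : at_addr t (l1 ++ l2) t' <-> exists t1, at_addr t l1 t1 /\ at_addr t1 l2 t'.
Proof.
  revert t; induction l1 as [|e l IH]; intros t; simpl.
  - split; [eauto| intros [t1 [-> H]]; auto].
  - destruct t as [x|b ch].
    + split; [tauto| intros [t1 [[] _]]].
    + split.
      * intros [h H]. apply IH in H. destruct H as [t1 [H1 H2]]. eauto.
      * intros [t1 [[h H1] H2]]. exists h. apply IH. eauto.
Qed.

Lemma at_addr_cons_node b ch (e : fibre P b) l t :
  at_addr (ch e) l t -> at_addr (PNode b ch) (proj1_sig e :: l) t.
Proof. destruct e as [e h]. simpl. intros H. exists h. exact H. Qed.

Lemma ptree_ext (s1 s2 : ptree P) :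
  (forall l t1, at_addr s1 l t1 -> exists t2, at_addr s2 l t2 /\ label t1 = label t2) -> s1 = s2.
Proof.
  revert s2; induction s1 as [x|b ch IH]; intros s2 H.
  - destruct (H [] (PLeaf x) eq_refl) as [t2 [-> E]].
    destruct s2; simpl in E; congruence.
  - destruct (H [] (PNode b ch) eq_refl) as [t2 [E1 E]]. simpl in E1. subst t2.
    destruct s2 as [y|b' ch']; simpl in E; [congruence|].
    injection E as <-. f_equal. apply functional_extensionality. intros e.
    apply IH. intros l t1 H1.
    destruct (H _ _ (at_addr_cons_node H1)) as [t2 [[h H2] E2]].
    exists t2. split; auto. replace e with (exist (fun e0 => pp P e0 = b) (proj1_sig e) h); auto.
    apply fib_eq; reflexivity.
Qed.

Lemma is_leaf_at_addr t l : is_leaf t l <-> exists x, at_addr t l (PLeaf x).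
Proof.
  revert t; induction l as [|e l IH]; intros t; simpl.
  - destruct t; simpl; split; try tauto; eauto; intros [x H]; discriminate.
  - destruct t as [x|b ch]; simpl.
    + split; [tauto| intros [x0 []]].
    + split.
      * intros [h H]. apply IH in H. destruct H as [x H]. eauto.
      * intros [x [h H]]. exists h. apply IH. eauto.
Qed.

Lemma at_addr_last_parent t l e t' : at_addr t (l ++ [e]) t' ->
  exists ch, at_addr t l (PNode (pp P e) ch).
Proof.
  intros H. apply at_addr_app in H. destruct H as [t1 [H1 H2]]. simpl in H2.
  destruct t1 as [x|b ch]; [tauto|]. destruct H2 as [h _]. subst. eauto.
Qed.

Lemma at_addr_wc t l t' : wc t -> at_addr t l t' -> wc t'.
Proof.
  revert t; induction l as [|e l IH]; intros t; simpl.
  - intros; subst; auto.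
  - destruct t as [x|b ch]; [tauto|]. simpl. intros W [h H].
    apply (IH _ (proj2 (W _)) H).
Qed.

Lemma at_addr_wc_rc t l e t' : wc t -> at_addr t (l ++ [e]) t' -> rc t' = ps P e.
Proof.
  intros W H. apply at_addr_app in H. destruct H as [t1 [H1 H2]].
  assert (W1 := at_addr_wc W H1). simpl in H2. destruct t1 as [x|b ch]; [tauto|].
  destruct H2 as [h ->]. apply (W1 (exist _ e h)).
Qed.

Lemma leafc_at_addr t l t' : wc t -> at_addr t l t' -> leafc t l = rc t'.
Proof.
  intros W H. destruct l as [|e0 l0] using rev_ind.
  - simpl in H. subst. reflexivity.
  - unfold leafc. rewrite rev_app_distr. symmetry. eapply at_addr_wc_rc; eauto.
Qed.

Lemma at_addr_node_in (t : ptree P) l b ch : at_addr t l (PNode b ch) -> node_in b t.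
Proof.
  revert t; induction l as [|e l IH]; intros t; simpl.
  - intros E; subst t. simpl. auto.
  - destruct t as [x|b' ch']; [tauto|]. intros [h H]. simpl. right. eauto.
Qed.

Lemma node_in_at_addr (t : ptree P) b : node_in b t -> exists l ch, at_addr t l (PNode b ch).
Proof.
  induction t as [x|b' ch' IH]; simpl; [tauto|]. intros [->|[e H]].
  - exists [], ch'. reflexivity.
  - destruct (IH e H) as [l [ch H1]]. exists (proj1_sig e :: l), ch. apply at_addr_cons_node. auto.
Qed.

End Addresses.

(** The action of [F] on a morphism [c : A -> B] relabels trees along [c]; as the middle
    square of [c] is a pullback, addresses are transported bijectively. *)
Section Fmap.
Variables (A B : PolyEnd) (c : Hom A B).

Lemma hinv_spec b (e' : fibre B (h1 c b)) : h2 c (proj1_sig (hinv c b e')) = proj1_sig e'.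
Proof.
  unfold hinv. destruct (constructive_indefinite_description _ _) as [x [[H1 H2] H3]]. simpl. exact H2.
Qed.

Lemma hinv_h2 b e (h : pp A e = b) (h' : pp B (h2 c e) = h1 c b) :
  hinv c b (exist _ (h2 c e) h') = exist _ e h.
Proof.
  apply fib_eq. unfold hinv. destruct (constructive_indefinite_description _ _) as [x [[H1 H2] H3]]. simpl.
  destruct (h_pb c b (h2 c e) h') as [y [_ Hy]].
  simpl in H2. rewrite <- (Hy x (conj H1 H2)). apply Hy. auto.
Qed.

Lemma h2_fib e b (h : pp A e = b) : pp B (h2 c e) = h1 c b.
Proof. rewrite h_p. congruence. Qed.

Lemma fmap_at_addr s l t : at_addr s l t -> at_addr (fmapT c s) (map (h2 c) l) (fmapT c t).
Proof.
  revert s; induction l as [|e l IH]; intros s; simpl.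
  - intros ->; reflexivity.
  - destruct s as [x|b ch]; [tauto|]. intros [h H]. simpl.
    exists (h2_fib h). rewrite (hinv_h2 h). auto.
Qed.

Lemma fmap_at_addr_inv s m t' : at_addr (fmapT c s) m t' ->
  exists l t, m = map (h2 c) l /\ at_addr s l t /\ t' = fmapT c t.
Proof.
  revert s; induction m as [|e' m IH]; intros s; simpl.
  - intros ->. exists [], s. simpl. auto.
  - destruct s as [x|b ch]; simpl; [tauto|]. intros [h H].
    apply IH in H. destruct H as [l [t [-> [H2 ->]]]].
    pose proof (@hinv_spec b (exist _ e' h)) as HS. simpl in HS.
    exists (proj1_sig (hinv c b (exist _ e' h)) :: l), t. split.
    + simpl. f_equal. auto.
    + split; auto. apply at_addr_cons_node. exact H2.
Qed.

Lemma fmap_rc t : rc (fmapT c t) = h0 c (rc t).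
Proof. destruct t; simpl; auto. apply h_t. Qed.

Definition map_label (y : P0 A + P1 A) : P0 B + P1 B :=
  match y with inl x => inl (h0 c x) | inr b => inr (h1 c b) end.

Lemma fmap_label t : label (fmapT c t) = map_label (label t).
Proof. destruct t; reflexivity. Qed.

Lemma fmap_inj s l1 l2 t1 t2 : at_addr s l1 t1 -> at_addr s l2 t2 -> map (h2 c) l1 = map (h2 c) l2 -> l1 = l2.
Proof.
  revert s l2; induction l1 as [|e l IH]; intros s l2; destruct l2 as [|e2 l2]; simpl; try discriminate; auto.
  destruct s as [x|b ch]; [tauto|]. intros [h H] [h' H'] E. injection E as E1 E2.
  assert (e = e2).
  { destruct (h_pb c b (h2 c e) (h2_fib h)) as [y [_ Hy]].
    rewrite <- (Hy e (conj h eq_refl)). apply Hy. split; auto. }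
  subst e2. f_equal. assert (h = h') by apply proof_irrelevance. subst. eauto.
Qed.

End Fmap.

Lemma fmapT_node A B (c : Hom A B) b ch :
  fmapT c (PNode b ch) = PNode (h1 c b) (fun e' => fmapT c (ch (hinv c b e'))).
Proof. reflexivity. Qed.

Definition id_hom (R : PolyEnd) : Hom R R.
Proof.
  refine (@mkHom R R (fun x => x) (fun x => x) (fun x => x) (fun e => eq_refl) (fun e => eq_refl)
     (fun b => eq_refl) _).
  intros b e' E. exists e'. split; auto. intros e [_ H]. auto.
Defined.

Lemma fmap_id (R : PolyEnd) (s : ptree R) : fmapT (id_hom R) s = s.
Proof.
  induction s as [x|b ch IH]; [reflexivity|]. rewrite fmapT_node. simpl. f_equal.
  apply functional_extensionality. intros e. rewrite IH. f_equal. apply fib_eq.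
  apply (@hinv_spec _ _ (id_hom R) b e).
Qed.

Section Composition.
Variables (A B C : PolyEnd) (d : Hom B C) (h : Hom A B).

Lemma comp_pb (b : P1 A) (e'' : P2 C) : pp C e'' = h1 d (h1 h b) ->
  exists! e : P2 A, pp A e = b /\ h2 d (h2 h e) = e''.
Proof.
  intros E. destruct (h_pb d (h1 h b) e'' E) as [e' [[E1 E2] U1]].
  destruct (h_pb h b e' E1) as [e [[F1 F2] U2]].
  exists e. split; [split; congruence|]. intros x [X1 X2].
  apply U2. split; auto. symmetry. apply U1. split; auto. rewrite h_p, X1. auto.
Qed.

Definition comp_hom : Hom A C.
Proof.
  refine (@mkHom A C (fun x => h0 d (h0 h x)) (fun x => h1 d (h1 h x)) (fun x => h2 d (h2 h x))
            _ _ _ comp_pb).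
  - intros e. rewrite h_s, h_s. auto.
  - intros e. rewrite h_p, h_p. auto.
  - intros x. rewrite h_t, h_t. auto.
Defined.

Lemma fmap_comp s : fmapT comp_hom s = fmapT d (fmapT h s).
Proof.
  apply ptree_ext. intros L t H. destruct (fmap_at_addr_inv H) as [l [t0 [-> [H0 ->]]]].
  exists (fmapT d (fmapT h t0)). split.
  - simpl. rewrite <- map_map. apply fmap_at_addr. apply fmap_at_addr. auto.
  - rewrite !fmap_label. destruct t0; reflexivity.
Qed.

End Composition.

Lemma fmap_homeq (A B : PolyEnd) (h h' : Hom A B) s : hom_eq h h' -> fmapT h s = fmapT h' s.
Proof.
  intros [E0 [E1 E2]]. apply ptree_ext. intros L t H. destruct (fmap_at_addr_inv H) as [l [t0 [-> [H0 ->]]]].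
  exists (fmapT h' t0). split.
  - replace (map (h2 h) l) with (map (h2 h') l) by (apply map_ext; auto). apply fmap_at_addr. auto.
  - rewrite !fmap_label. destruct t0; simpl; congruence.
Qed.

Section Inverse.
Variables (A B : PolyEnd) (p : Hom A B).
Hypothesis i0 : forall x y, h0 p x = h0 p y -> x = y.
Hypothesis i1 : forall x y, h1 p x = h1 p y -> x = y.
Hypothesis i2 : forall x y, h2 p x = h2 p y -> x = y.
Hypothesis s0 : forall y, exists x, h0 p x = y.
Hypothesis s1 : forall y, exists x, h1 p x = y.
Hypothesis s2 : forall y, exists x, h2 p x = y.

Definition inv0 y := proj1_sig (constructive_indefinite_description _ (s0 y)).
Definition inv1 y := proj1_sig (constructive_indefinite_description _ (s1 y)).
Definition inv2 y := proj1_sig (constructive_indefinite_description _ (s2 y)).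
Lemma inv0_spec y : h0 p (inv0 y) = y.
Proof. unfold inv0. destruct (constructive_indefinite_description _ _). auto. Qed.
Lemma inv1_spec y : h1 p (inv1 y) = y.
Proof. unfold inv1. destruct (constructive_indefinite_description _ _). auto. Qed.
Lemma inv2_spec y : h2 p (inv2 y) = y.
Proof. unfold inv2. destruct (constructive_indefinite_description _ _). auto. Qed.

Lemma inv_pb (b : P1 B) (e' : P2 A) : pp A e' = inv1 b -> exists! e, pp B e = b /\ inv2 e = e'.
Proof.
  intros E. exists (h2 p e'). split.
  - split.
    + rewrite h_p, E. apply inv1_spec.
    + apply i2. apply inv2_spec.
  - intros x [X1 X2]. rewrite <- X2. apply inv2_spec.
Qed.

Definition inv_hom : Hom B A.
Proof.
  refine (@mkHom B A inv0 inv1 inv2 _ _ _ inv_pb).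
  - intros e. apply i0. rewrite <- h_s, !inv0_spec, inv2_spec. auto.
  - intros e. apply i1. rewrite <- h_p, !inv1_spec, inv2_spec. auto.
  - intros x. apply i0. rewrite <- h_t, !inv0_spec, inv1_spec. auto.
Defined.

Lemma inv_left : hom_eq (comp_hom p inv_hom) (id_hom B).
Proof. split; [|split]; intros; simpl; [apply inv0_spec | apply inv1_spec | apply inv2_spec]. Qed.

Lemma inv_right : hom_eq (comp_hom inv_hom p) (id_hom A).
Proof. split; [|split]; intros; simpl; [apply i0, inv0_spec | apply i1, inv1_spec | apply i2, inv2_spec]. Qed.

End Inverse.

Section Grafting.
Variable P : PolyEnd.

Lemma subst_at_addr (s : ptree P) f l t : at_addr s l t -> at_addr (subst s f) l (subst t (fun l' => f (l ++ l'))).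
Proof.
  revert s f; induction l as [|e l IH]; intros s f; simpl.
  - intros ->. f_equal.
  - destruct s as [x|b ch]; [tauto|]. intros [h H]. simpl. exists h.
    apply (IH _ (fun l0 => f (e :: l0))). exact H.
Qed.

Lemma subst_at_addr_leaf (s : ptree P) f l1 x l2 t :
  at_addr s l1 (PLeaf x) -> at_addr (f l1) l2 t -> at_addr (subst s f) (l1 ++ l2) t.
Proof.
  intros H1 H2. apply at_addr_app. exists (subst (PLeaf x) (fun l' => f (l1 ++ l'))).
  split; [apply subst_at_addr; auto|]. simpl. rewrite app_nil_r. auto.
Qed.

Lemma subst_at_addr_inv (s : ptree P) f L t : at_addr (subst s f) L t ->
  (exists l1 x l2, L = l1 ++ l2 /\ at_addr s l1 (PLeaf x) /\ at_addr (f l1) l2 t) \/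
  (exists b ch, at_addr s L (PNode b ch) /\ t = subst (PNode b ch) (fun l' => f (L ++ l'))).
Proof.
  revert f L t; induction s as [x|b ch IH]; intros f L t H.
  - left. exists [], x, L. simpl. auto.
  - destruct L as [|e L].
    + simpl in H. subst t. right. exists b, ch. simpl. auto.
    + simpl in H. destruct H as [h H].
      destruct (IH _ _ _ _ H) as [[l1 [x [l2 [-> [H1 H2]]]]] | [b' [ch' [H1 ->]]]].
      * left. exists (e :: l1), x, l2. simpl. split; auto. split; auto. exists h; auto.
      * right. exists b', ch'. split; [exists h; auto| reflexivity].
Qed.

Lemma subst_wc (s : ptree P) f : wc s ->
  (forall l x, at_addr s l (PLeaf x) -> wc (f l) /\ rc (f l) = x) -> wc (subst s f).
Proof.
  revert f; induction s as [x|b ch IH]; intros f W Hf.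
  - simpl. apply (Hf [] x eq_refl).
  - simpl. intros e. split.
    + destruct (ch e) as [y|b' ch'] eqn:E.
      * simpl. destruct (Hf (proj1_sig e :: []) y) as [_ R].
        { rewrite <- E. apply at_addr_cons_node. reflexivity. }
        rewrite R. rewrite <- (proj1 (W e)), E. reflexivity.
      * simpl. rewrite <- (proj1 (W e)), E. reflexivity.
    + apply IH. apply W. intros l x H. apply Hf. apply at_addr_cons_node. auto.
Qed.

End Grafting.

(** The extension [ext g : ptree S -> ptree T] of [g : S -> F T] (the monad map [g^#])
    replaces each node [b] by the tree [gtree b] and each input [e] of [b] by the
    leaf of [gtree b] at address [gaddr e]. *)
Section Extension.
Variables (S T : PolyEnd) (g : Hom S (F T)).

(** [gtree b] is the tree [g b]; [gaddr e] is the address of the leaf of [gtree (p e)]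
    corresponding to the input [e]. *)
Definition gtree b : ptree T := proj1_sig (h1 g b).
Definition gaddr e : list (P2 T) := snd (proj1_sig (h2 g e)).

Lemma gtree_wc b : wc (gtree b).
Proof. exact (proj2_sig (h1 g b)). Qed.

Lemma gtree_rc b : rc (gtree b) = h0 g (pt S b).
Proof. exact (h_t g b). Qed.

Lemma g2_tree e : fst (proj1_sig (h2 g e)) = h1 g (pp S e).
Proof. exact (h_p g e). Qed.

Lemma gaddr_leaf e : at_addr (gtree (pp S e)) (gaddr e) (@PLeaf T (h0 g (ps S e))).
Proof.
  pose proof (proj2_sig (h2 g e)) as L. simpl in L. rewrite g2_tree in L.
  apply is_leaf_at_addr in L. destruct L as [x L].
  pose proof (h_s g e) as E. simpl in E. rewrite g2_tree in E.
  assert (x = h0 g (ps S e)); [|subst; exact L].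
  rewrite <- E. exact (eq_sym (leafc_at_addr (gtree_wc _) L)).
Qed.

(** Inputs of [b] correspond bijectively to leaves of [gtree b] (pullback square of [g]). *)
Lemma g2_ext e1 e2 : pp S e1 = pp S e2 -> gaddr e1 = gaddr e2 -> h2 g e1 = h2 g e2.
Proof.
  intros E1 E2. destruct (h2 g e1) as [[x1 l1] p1] eqn:Q1. destruct (h2 g e2) as [[x2 l2] p2] eqn:Q2.
  unfold gaddr in E2. rewrite Q1, Q2 in E2. simpl in E2. subst l2.
  pose proof (g2_tree e1) as F1. pose proof (g2_tree e2) as F2. rewrite Q1 in F1. rewrite Q2 in F2.
  simpl in F1, F2. subst. clear Q1 Q2. revert p1 p2. rewrite E1. intros. f_equal. apply proof_irrelevance.
Qed.

Lemma g2_inj e1 e2 : pp S e1 = pp S e2 -> h2 g e1 = h2 g e2 -> e1 = e2.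
Proof.
  intros E1 E2. destruct (h_pb g (pp S e1) (h2 g e1) (g2_tree e1)) as [y [_ Hy]].
  rewrite <- (Hy e1 (conj eq_refl eq_refl)). apply Hy. auto.
Qed.

Lemma gaddr_inj e1 e2 : pp S e1 = pp S e2 -> gaddr e1 = gaddr e2 -> e1 = e2.
Proof. intros; apply g2_inj; auto; apply g2_ext; auto. Qed.

Lemma gaddr_surj b l x : at_addr (gtree b) l (PLeaf x) -> exists e, pp S e = b /\ gaddr e = l.
Proof.
  intros H. assert (L : is_leaf (proj1_sig (h1 g b)) l) by (apply is_leaf_at_addr; eauto).
  set (y := exist (fun x => is_leaf (proj1_sig (fst x)) (snd x)) (h1 g b, l) L : P2 (F T)).
  destruct (h_pb g b y eq_refl) as [e [[E1 E2] _]]. exists e. split; auto.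
  unfold gaddr. rewrite E2. reflexivity.
Qed.

(** What is grafted on the leaf of [gtree b] with address [l]: the extension of the
    subtree at the corresponding input of [b]. *)
Definition graft b (ch : fibre S b -> ptree S) : list (P2 T) -> ptree T :=
  fun l =>
    match excluded_middle_informative
            (exists e : fibre S b, snd (proj1_sig (h2 g (proj1_sig e))) = l) with
    | left H => ext g (ch (proj1_sig (constructive_indefinite_description _ H)))
    | right _ => @PLeaf T (h0 g (pt S b))
    end.

Lemma ext_node b ch : ext g (PNode b ch) = subst (gtree b) (graft ch).
Proof. reflexivity. Qed.

Lemma graft_gaddr b ch (e : fibre S b) : graft ch (gaddr (proj1_sig e)) = ext g (ch e).
Proof.
  unfold graft. destruct (excluded_middle_informative _) as [H|H].
  - destruct (constructive_indefinite_description _ H) as [e' E]. simpl.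
    f_equal. f_equal. apply fib_eq. apply gaddr_inj.
    + rewrite (proj2_sig e), (proj2_sig e'). reflexivity.
    + exact E.
  - exfalso. apply H. exists e. reflexivity.
Qed.

Fixpoint gaddrs (l : list (P2 S)) : list (P2 T) :=
  match l with [] => [] | e :: l => gaddr e ++ gaddrs l end.

Lemma gaddrs_app l1 l2 : gaddrs (l1 ++ l2) = gaddrs l1 ++ gaddrs l2.
Proof. induction l1; simpl; auto. rewrite IHl1, app_assoc. auto. Qed.

Lemma ext_at_addr m l t : at_addr m l t -> at_addr (ext g m) (gaddrs l) (ext g t).
Proof.
  revert m; induction l as [|e l IH]; intros m; simpl.
  - intros ->; reflexivity.
  - destruct m as [x|b ch]; [tauto|]. intros [h H].
    rewrite ext_node. eapply subst_at_addr_leaf.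
    + pose proof (gaddr_leaf e) as L. rewrite h in L. exact L.
    + pose proof (graft_gaddr ch (exist _ e h)) as V. simpl in V. rewrite V. auto.
Qed.

Lemma ext_at_addr_inv m L t : at_addr (ext g m) L t ->
  exists l t0, at_addr m l t0 /\
   ((exists x, t0 = PLeaf x /\ L = gaddrs l /\ t = @PLeaf T (h0 g x)) \/
    (exists b ch L2 b' ch', t0 = PNode b ch /\ L = gaddrs l ++ L2 /\ at_addr (gtree b) L2 (PNode b' ch') /\
        t = subst (PNode b' ch') (fun l' => graft ch (L2 ++ l')))).
Proof.
  revert L t; induction m as [x|b ch IH]; intros L t H.
  - simpl in H. destruct L; simpl in H; [|tauto]. subst t. exists [], (PLeaf x). simpl.
    split; auto. left. exists x. auto.
  - rewrite ext_node in H. apply subst_at_addr_inv in H.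
    destruct H as [[l1 [x [l2 [-> [H1 H2]]]]] | [b' [ch' [H1 ->]]]].
    + destruct (gaddr_surj H1) as [e [E1 E2]]. subst l1.
      pose proof (graft_gaddr ch (exist _ e E1)) as V. simpl in V. rewrite V in H2.
      destruct (IH _ _ _ H2) as [l [t0 [A1 R]]].
      exists (e :: l), t0. split; [exists E1; auto|]. simpl.
      destruct R as [[x0 [-> [-> ->]]] | [b0 [ch0 [L2 [b0' [ch0' [-> [-> R]]]]]]]].
      * left. eauto.
      * right. exists b0, ch0, L2, b0', ch0'. rewrite app_assoc. auto.
    + exists [], (PNode b ch). simpl. split; auto. right.
      exists b, ch, L, b', ch'. auto.
Qed.

Lemma ext_wc m : wc m -> wc (ext g m) /\ rc (ext g m) = h0 g (rc m).
Proof.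
  induction m as [x|b ch IH]; intros W.
  - simpl. auto.
  - rewrite ext_node. split.
    + apply subst_wc. apply gtree_wc. intros l x H.
      destruct (gaddr_surj H) as [e [E1 E2]]. subst l.
      pose proof (graft_gaddr ch (exist _ e E1)) as V. simpl in V. rewrite V.
      destruct (IH (exist _ e E1) (proj2 (W _))) as [W1 R1]. split; auto.
      rewrite R1, (proj1 (W _)). simpl.
      pose proof (gaddr_leaf e) as L. rewrite E1 in L. pose proof (at_addr_det H L). congruence.
    + simpl. destruct (gtree b) as [y|b0 ch0] eqn:E.
      * simpl. assert (H : at_addr (gtree b) [] (PLeaf y)) by (rewrite E; reflexivity).
        destruct (gaddr_surj H) as [e [E1 E2]].
        pose proof (graft_gaddr ch (exist _ e E1)) as V. simpl in V. rewrite E2 in V. rewrite V.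
        rewrite (proj2 (IH _ (proj2 (W _)))), (proj1 (W _)). simpl.
        pose proof (gaddr_leaf e) as L. rewrite E1, E2, E in L. simpl in L. injection L as L.
        pose proof (gtree_rc b) as R. rewrite E in R. simpl in R. congruence.
      * simpl. pose proof (gtree_rc b) as R. rewrite E in R. simpl in R. auto.
Qed.

End Extension.

(** In a polynomial endofunctor with [t] and [s] injective, a well-coloured tree rooted
    at a root colour has at most one address for each colour; hence maximal subtrees
    are unique. *)
Section MaximalSubtree.
Variable S : PolyEnd.
Hypothesis tinj : forall b b', pt S b = pt S b' -> b = b'.
Hypothesis sinj : forall e e', ps S e = ps S e' -> e = e'.

(** Colours determine addresses (induction on the address, using injectivity of [s]). *)
Lemma addr_unique (tau : ptree S) : wc tau -> is_root S (rc tau) ->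
  forall l1 l2 t1 t2, at_addr tau l1 t1 -> at_addr tau l2 t2 -> rc t1 = rc t2 -> l1 = l2.
Proof.
  intros W R.
  assert (forall n l1 l2 t1 t2, length l1 <= n -> at_addr tau l1 t1 -> at_addr tau l2 t2 -> rc t1 = rc t2 -> l1 = l2).
  { induction n as [|n IH]; intros l1 l2 t1 t2 Len H1 H2 E.
    - destruct l1; [|simpl in Len; lia]. simpl in H1. subst t1.
      destruct l2 as [|e l2'] using rev_ind; auto.
      exfalso. apply R. exists e. rewrite E. symmetry. eapply at_addr_wc_rc; eauto.
    - destruct l1 as [|e1 l1'] using rev_ind.
      + simpl in H1. subst t1. destruct l2 as [|e l2'] using rev_ind; auto.
        exfalso. apply R. exists e. rewrite E. symmetry. eapply at_addr_wc_rc; eauto.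
      + destruct l2 as [|e2 l2'] using rev_ind.
        * simpl in H2. subst t2. exfalso. apply R. exists e1. rewrite <- E. symmetry. eapply at_addr_wc_rc; eauto.
        * clear IHl1' IHl2'.
          rewrite (at_addr_wc_rc W H1), (at_addr_wc_rc W H2) in E. apply sinj in E. subst e2.
          destruct (at_addr_last_parent H1) as [ch1 P1]. destruct (at_addr_last_parent H2) as [ch2 P2].
          f_equal. eapply IH; [| exact P1 | exact P2 | reflexivity].
          rewrite length_app in Len. simpl in Len. lia. }
  intros l1 l2 t1 t2. apply (H (length l1)). auto.
Qed.

Lemma max_leaf (tau : ptree S) l x b : is_max_subtree tau -> at_addr tau l (PLeaf x) -> pt S b <> x.
Proof.
  intros [W [R N]] H E. destruct (node_in_at_addr (N b)) as [l' [ch H']].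
  assert (l = l') by (eapply (addr_unique W R H H'); simpl; auto). subst l'.
  pose proof (at_addr_det H H'). discriminate.
Qed.

Lemma max_unique (t0 t1 : ptree S) : is_max_subtree t0 -> is_max_subtree t1 -> rc t0 = rc t1 -> t0 = t1.
Proof.
  intros M0 M1 Er. apply ptree_ext.
  assert (K : forall l u0, at_addr t0 l u0 -> exists u1, at_addr t1 l u1 /\ label u0 = label u1 /\ rc u0 = rc u1).
  { intros l. induction l as [|e l IH] using rev_ind; intros u0 H.
    - simpl in H. subst u0. exists t1. split; [reflexivity|].
      split; auto. destruct t0 as [x|b ch], t1 as [y|b' ch']; simpl in *; subst; auto.
      + exfalso. eapply (max_leaf (b:=b') (l:=[]) M0); simpl; eauto.
      + exfalso. eapply (max_leaf (b:=b) (l:=[]) M1); simpl; eauto.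
      + f_equal. auto.
    - destruct (at_addr_last_parent H) as [ch P0']. destruct (IH _ P0') as [u1 [Hu1 [Tp _]]].
      destruct u1 as [y|b1 ch1]; simpl in Tp; [discriminate|]. injection Tp as <-.
      set (u1 := ch1 (exist _ e eq_refl)).
      assert (Hu : at_addr t1 (l ++ [e]) u1).
      { apply at_addr_app. exists (PNode (pp S e) ch1). split; auto. simpl. exists eq_refl. reflexivity. }
      exists u1. split; auto.
      assert (Erc : rc u0 = rc u1).
      { rewrite (at_addr_wc_rc (proj1 M0) H), (at_addr_wc_rc (proj1 M1) Hu). auto. }
      split; auto.
      destruct u0 as [x|b ch0], u1 as [y|b' ch0']; simpl in *; subst; auto.
      + exfalso. eapply (max_leaf (b:=b') M0 H). auto.
      + exfalso. eapply (max_leaf (b:=b) M1 Hu). auto.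
      + f_equal. auto. }
  intros l u0 H. destruct (K _ _ H) as [u1 [A1 [A2 _]]]. eauto.
Qed.

End MaximalSubtree.

(** Existence of the maximal subtree of a tree: unfold [S] from its root up to a depth
    bounding the [sigma]-distance of every colour to the root. *)
Section Unfolding.
Variable S : PolyEnd.
Hypothesis tinj : forall b b', pt S b = pt S b' -> b = b'.

Fixpoint steps (n : nat) (x y : P0 S) : Prop :=
  match n with 0 => x = y | Datatypes.S n => exists z, @sigma_step S x z /\ steps n z y end.

Lemma steps_add n m x y z : steps n x y -> steps m y z -> steps (n + m) x z.
Proof.
  revert x; induction n as [|n IH]; intros x; simpl.
  - intros ->; auto.
  - intros [w [H1 H2]] H3. exists w. split; auto.
Qed.

Lemma rt_steps x y : clos_refl_trans _ (@sigma_step S) x y -> exists n, steps n x y.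
Proof.
  induction 1.
  - exists 1. simpl. eauto.
  - exists 0. reflexivity.
  - destruct IHclos_refl_trans1 as [n H1], IHclos_refl_trans2 as [m H2].
    exists (n + m). eapply steps_add; eauto.
Qed.

(** The unfolding of depth [n] at colour [x] ([t] is injective, so the operation with
    output [x] is unique when it exists). *)
Fixpoint build (n : nat) (x : P0 S) : ptree S :=
  match n with
  | 0 => PLeaf x
  | Datatypes.S n =>
      match excluded_middle_informative (exists b, pt S b = x) with
      | left H => PNode (proj1_sig (constructive_indefinite_description _ H))
                        (fun e => build n (ps S (proj1_sig e)))
      | right _ => PLeaf x
      end
  end.

Lemma build_wc n x : wc (build n x) /\ rc (build n x) = x.
Proof.
  revert x; induction n as [|n IH]; intros x; simpl; auto.
  destruct (excluded_middle_informative _) as [H|H]; simpl; auto.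
  destruct (constructive_indefinite_description _ H) as [b E]. simpl. split; auto.
  intros e. destruct (IH (ps S (proj1_sig e))). split; auto.
Qed.

Lemma build_node n x b : pt S b = x ->
  build (Datatypes.S n) x = PNode b (fun e => build n (ps S (proj1_sig e))).
Proof.
  intros E. simpl. destruct (excluded_middle_informative _) as [H|H].
  - destruct (constructive_indefinite_description _ H) as [b' E']. simpl.
    assert (b' = b) by (apply tinj; congruence). subst b'. reflexivity.
  - exfalso. eauto.
Qed.

Lemma build_at_addr N r d x : steps d x r -> d < N -> exists l, at_addr (build N r) l (build (N - d) x).
Proof.
  revert x; induction d as [|d IH]; intros x H Hd.
  - simpl in H. subst. exists []. replace (N - 0) with N by lia. reflexivity.
  - destruct H as [z [[e [E1 E2]] H]]. destruct (IH z H ltac:(lia)) as [l Hl].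
    destruct (N - d) as [|k] eqn:Ek; [lia|].
    rewrite (build_node k (eq_sym E2)) in Hl.
    exists (l ++ [e]). apply at_addr_app. eexists. split; [exact Hl|].
    simpl. exists eq_refl. subst x. simpl. f_equal. lia.
Qed.

End Unfolding.

Lemma fuel_bound (S : PolyEnd) (r : P0 S) (L : list (P0 S)) :
  (forall x, exists n, steps n x r) -> exists N, forall x, In x L -> exists n, steps n x r /\ n < N.
Proof.
  intros H. induction L as [|x L IH].
  - exists 0. simpl. tauto.
  - destruct IH as [N HN]. destruct (H x) as [n Hn]. exists (N + n + 1).
    intros y [<-|Hy].
    + exists n. split; auto. lia.
    + destruct (HN y Hy) as [m [Hm1 Hm2]]. exists m. split; auto. lia.
Qed.

Lemma tree_max_subtree (S : PolyEnd) : is_tree S ->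
  exists mu : ptree S, is_max_subtree mu /\ forall x, exists l t, at_addr mu l t /\ rc t = x.
Proof.
  intros [[L0 HL0] [_ [_ [tinj [sinj [[r [Rr Ru]] Reach]]]]]].
  assert (Hd : forall x, exists n, steps n x r).
  { intros x. apply rt_steps. apply Reach. auto. }
  destruct (fuel_bound L0 Hd) as [N HN].
  exists (build N r). destruct (build_wc N r) as [W R].
  split; [split; [auto| split]|].
  - rewrite R. auto.
  - intros b. destruct (HN (pt S b) (HL0 _)) as [d [Hs Hlt]].
    destruct (build_at_addr tinj Hs Hlt) as [l Hl].
    destruct (N - d) as [|k] eqn:E; [lia|].
    rewrite (build_node tinj k (eq_refl (pt S b))) in Hl. eapply at_addr_node_in; eauto.
  - intros x. destruct (HN x (HL0 _)) as [d [Hs Hlt]].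
    destruct (build_at_addr tinj Hs Hlt) as [l Hl]. exists l, (build (N - d) x). split; auto.
    apply build_wc.
Qed.

(** The address polynomial [addr_poly tau] of a tree [tau]: colours, operations and
    edges are the addresses in [tau] of colours, nodes and edges. *)
Section AddressPolynomial.
Variables (R : PolyEnd) (tau : ptree R).
Hypothesis Wt : wc tau.

Definition Addr0 := {l : list (P2 R) | exists t, at_addr tau l t}.
Definition Addr1 := {lb : list (P2 R) * P1 R | exists ch, at_addr tau (fst lb) (PNode (snd lb) ch)}.
Definition Addr2 := {le : list (P2 R) * P2 R | exists t, at_addr tau (fst le ++ [snd le]) t}.

Definition addr_s (e : Addr2) : Addr0 :=
  exist _ (fst (proj1_sig e) ++ [snd (proj1_sig e)]) (proj2_sig e).

Lemma addr_p_pf (e : Addr2) : exists ch, at_addr tau (fst (fst (proj1_sig e), pp R (snd (proj1_sig e))))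
   (PNode (snd (fst (proj1_sig e), pp R (snd (proj1_sig e)))) ch).
Proof. destruct e as [[l e] [t H]]. simpl. exact (at_addr_last_parent H). Qed.

Definition addr_p (e : Addr2) : Addr1 := exist _ (fst (proj1_sig e), pp R (snd (proj1_sig e))) (addr_p_pf e).

Lemma addr_t_pf (b : Addr1) : exists t, at_addr tau (fst (proj1_sig b)) t.
Proof. destruct b as [[l b] [ch H]]. eauto. Qed.

Definition addr_t (b : Addr1) : Addr0 := exist _ (fst (proj1_sig b)) (addr_t_pf b).

Definition addr_poly : PolyEnd := mkPoly addr_s addr_p addr_t.

Definition addr_col (x : Addr0) : P0 R := rc (proj1_sig (constructive_indefinite_description _ (proj2_sig x))).

Lemma addr_col_spec (x : Addr0) t : at_addr tau (proj1_sig x) t -> addr_col x = rc t.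
Proof.
  intros H. unfold addr_col. destruct (constructive_indefinite_description _ _) as [t' H']. simpl.
  rewrite (at_addr_det H' H). auto.
Qed.

Lemma addr_proj_s (e : Addr2) : ps R (snd (proj1_sig e)) = addr_col (addr_s e).
Proof.
  destruct e as [[l e] pf]. pose proof pf as [t H]. simpl.
  erewrite addr_col_spec by (simpl; exact H). symmetry. exact (at_addr_wc_rc Wt H).
Qed.

Lemma addr_proj_t (b : Addr1) : pt R (snd (proj1_sig b)) = addr_col (addr_t b).
Proof.
  destruct b as [[l b] pf]. pose proof pf as [ch H]. simpl.
  erewrite addr_col_spec by (simpl; exact H). reflexivity.
Qed.

Lemma addr_proj_pb (b : Addr1) (e' : P2 R) : pp R e' = snd (proj1_sig b) ->
  exists! e : Addr2, addr_p e = b /\ snd (proj1_sig e) = e'.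
Proof.
  destruct b as [[l b] [ch H]]. simpl. intros E.
  assert (Hv : exists t, at_addr tau (fst (l, e') ++ [snd (l, e')]) t).
  { simpl. exists (ch (exist _ e' E)). apply at_addr_app. exists (PNode b ch). split; auto.
    simpl. exists E. reflexivity. }
  exists (exist _ (l, e') Hv). split.
  - split; auto. apply sig_eq. simpl. rewrite E. reflexivity.
  - intros [[l' e''] Hv'] [E1 E2]. simpl in E2. subst e''. apply sig_eq. simpl.
    apply (f_equal (@proj1_sig _ _)) in E1. simpl in E1. injection E1. intros; subst; auto.
Qed.

Definition addr_proj : Hom addr_poly R :=
  @mkHom addr_poly R addr_col (fun b => snd (proj1_sig b)) (fun e => snd (proj1_sig e))
    addr_proj_s (fun e => eq_refl) addr_proj_t addr_proj_pb.

Lemma addr_tree_labels (th : ptree addr_poly) q t : wc th -> at_addr th q t ->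
  proj1_sig (rc t) = proj1_sig (rc th) ++ map (fun e : Addr2 => snd (proj1_sig e)) q.
Proof.
  revert th; induction q as [|e q IH]; intros th W H.
  - simpl in H. subst. simpl. rewrite app_nil_r. auto.
  - destruct th as [x|n ch]; simpl in H; [tauto|]. destruct H as [h H].
    rewrite (IH _ (proj2 (W _)) H). rewrite (proj1 (W _)). simpl.
    rewrite <- h. simpl. rewrite <- app_assoc. reflexivity.
Qed.

Lemma addr_tree_edge (th : ptree addr_poly) q e q2 t : wc th -> at_addr th (q ++ e :: q2) t ->
  proj1_sig e = (proj1_sig (rc th) ++ map (fun e : Addr2 => snd (proj1_sig e)) q, snd (proj1_sig e)).
Proof.
  intros W H. apply at_addr_app in H. destruct H as [t1 [H1 H2]].
  pose proof (addr_tree_labels W H1) as E. destruct t1 as [x|n ch]; simpl in H2; [tauto|]. destruct H2 as [h _].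
  subst n. simpl in E. destruct e as [[l e0] pf]. simpl in *. rewrite <- E. reflexivity.
Qed.

Lemma addr_t_inj (n1 n2 : Addr1) : addr_t n1 = addr_t n2 -> n1 = n2.
Proof.
  destruct n1 as [[l1 b1] [c1 H1]], n2 as [[l2 b2] [c2 H2]]. intros E.
  apply (f_equal (@proj1_sig _ _)) in E. simpl in E. subst l2. simpl in *.
  pose proof (at_addr_det H1 H2) as E. apply (f_equal (@label _)) in E. simpl in E. injection E as ->.
  apply sig_eq. reflexivity.
Qed.

Lemma addr_s_inj (e1 e2 : Addr2) : addr_s e1 = addr_s e2 -> e1 = e2.
Proof.
  destruct e1 as [[l1 x1] p1], e2 as [[l2 x2] p2]. intros E.
  apply (f_equal (@proj1_sig _ _)) in E. simpl in E. apply app_inj_tail in E. destruct E; subst.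
  apply sig_eq. reflexivity.
Qed.

End AddressPolynomial.

(** A tree [s] sitting inside [tau] at address [base] ([embedded base s]) lifts to a
    tree [lift base s] of [addr_poly tau] labelled by the addresses of its positions. *)
Section Lifting.
Variables (R : PolyEnd) (tau : ptree R).
Hypothesis Wt : wc tau.

(** [base] as a colour of [addr_poly tau] (a default when it is not an address). *)
Definition addr_of (base : list (P2 R)) : Addr0 tau :=
  match excluded_middle_informative (exists t, at_addr tau base t) with
  | left H => exist _ base H
  | right _ => exist _ [] (ex_intro _ tau eq_refl)
  end.

Lemma addr_of_val base t : at_addr tau base t -> proj1_sig (addr_of base) = base.
Proof. intros H. unfold addr_of. destruct (excluded_middle_informative _) as [H'|H']; simpl; auto. exfalso; eauto. Qed.

Fixpoint lift (base : list (P2 R)) (s : ptree R) : ptree (addr_poly tau) :=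
  match s with
  | PLeaf _ => @PLeaf (addr_poly tau) (addr_of base)
  | PNode b ch =>
      match excluded_middle_informative (exists ch0, at_addr tau base (PNode b ch0)) with
      | left H =>
          @PNode (addr_poly tau) (exist _ (base, b) H : Addr1 tau)
            (fun e' => match excluded_middle_informative
                               (pp R (snd (proj1_sig (proj1_sig e')))= b) with
                       | left h => lift (base ++ [snd (proj1_sig (proj1_sig e'))])
                                        (ch (exist _ _ h))
                       | right _ => @PLeaf (addr_poly tau) (addr_of base)
                       end)
      | right _ => @PLeaf (addr_poly tau) (addr_of base)
      end
  end.

Fixpoint lift_addr (base : list (P2 R)) (l : list (P2 R)) : list (Addr2 tau) :=
  match l with
  | [] => []
  | e :: l' =>
      match excluded_middle_informative (exists t, at_addr tau (base ++ [e]) t) with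
      | left H => (exist _ (base, e) H : Addr2 tau) :: lift_addr (base ++ [e]) l'
      | right _ => []
      end
  end.

Definition embedded (base : list (P2 R)) (s : ptree R) : Prop :=
  forall l t, at_addr s l t -> exists t', at_addr tau (base ++ l) t' /\
     match t with PLeaf x => rc t' = x | PNode b _ => exists ch', t' = PNode b ch' end.

Lemma embedded_child base b ch e h : embedded base (PNode b ch) -> embedded (base ++ [e]) (ch (exist _ e h)).
Proof.
  intros Em l t H. destruct (Em (e :: l) t) as [t' [H1 H2]].
  - simpl. exists h. auto.
  - exists t'. rewrite <- app_assoc. simpl. auto.
Qed.

Lemma embedded_root base s : embedded base s ->
  match s with PLeaf x => exists t', at_addr tau base t' /\ rc t' = x
             | PNode b _ => exists ch', at_addr tau base (PNode b ch') end.
Proof.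
  intros Em. destruct (Em [] s eq_refl) as [t' [H1 H2]]. rewrite app_nil_r in H1.
  destruct s; eauto. destruct H2 as [ch' ->]. eauto.
Qed.

Lemma lift_node base b ch (H : exists ch0, at_addr tau base (PNode b ch0)) :
  lift base (PNode b ch) = @PNode (addr_poly tau) (exist _ (base, b) H : Addr1 tau)
            (fun e' => match excluded_middle_informative
                               (pp R (snd (proj1_sig (proj1_sig e')))= b) with
                       | left h => lift (base ++ [snd (proj1_sig (proj1_sig e'))])
                                        (ch (exist _ _ h))
                       | right _ => @PLeaf (addr_poly tau) (addr_of base)
                       end).
Proof.
  simpl. destruct (excluded_middle_informative _) as [H'|H']; [|exfalso; auto].
  assert (H = H') by apply proof_irrelevance. subst. reflexivity.
Qed.

Lemma lift_at_addr base s l t : embedded base s -> at_addr s l t ->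
  at_addr (lift base s) (lift_addr base l) (lift (base ++ l) t).
Proof.
  revert base s; induction l as [|e l IH]; intros base s Em H.
  - simpl in H. subst. simpl. rewrite app_nil_r. reflexivity.
  - destruct s as [x|b ch]; simpl in H; [tauto|]. destruct H as [h H].
    pose proof (embedded_root Em) as Hr. simpl in Hr.
    rewrite (lift_node ch Hr). simpl.
    destruct (excluded_middle_informative _) as [Hv|Hv].
    2:{ exfalso. apply Hv. destruct (Em [e] (ch (exist _ e h))) as [t' [H1 _]]; [simpl; exists h; reflexivity|].
        eauto. }
    simpl. unshelve eexists.
    { apply sig_eq. simpl. rewrite h. reflexivity. }
    simpl. destruct (excluded_middle_informative _) as [h'|h']; [|exfalso; auto].
    assert (h' = h) by apply proof_irrelevance. subst h'.
    replace (base ++ e :: l) with ((base ++ [e]) ++ l) by (rewrite <- app_assoc; auto).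
    apply IH; auto. apply embedded_child; auto.
Qed.

Lemma lift_at_addr_inv base s q th : embedded base s -> at_addr (lift base s) q th ->
  exists l t, at_addr s l t /\ q = lift_addr base l /\ th = lift (base ++ l) t.
Proof.
  revert base s th; induction q as [|e q IH]; intros base s th Em H.
  - simpl in H. subst. exists [], s. simpl. rewrite app_nil_r. auto.
  - destruct s as [x|b ch].
    + simpl in H. tauto.
    + pose proof (embedded_root Em) as Hr. simpl in Hr. rewrite (lift_node ch Hr) in H.
      simpl in H. destruct H as [h H].
      destruct (excluded_middle_informative _) as [h'|h'].
      2:{ exfalso. apply h'. apply (f_equal (@proj1_sig _ _)) in h. simpl in h.
          injection h. auto. }
      destruct e as [[l0 e0] pf]. simpl in *.
      apply (f_equal (@proj1_sig _ _)) in h. simpl in h. injection h. intros _ E0. subst l0.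
      destruct (IH _ _ _ (embedded_child (h:=h') Em) H) as [l [t [H1 [-> ->]]]].
      exists (e0 :: l), t. split; [exists h'; auto|]. split.
      * simpl. destruct (excluded_middle_informative _) as [Hv|Hv]; [|exfalso; eauto].
        f_equal. apply sig_eq. reflexivity.
      * rewrite <- app_assoc. reflexivity.
Qed.

Lemma lift_rc base s : embedded base s -> proj1_sig (rc (lift base s)) = base.
Proof.
  intros Em. pose proof (embedded_root Em) as Hr. destruct s as [x|b ch].
  - simpl. destruct Hr as [t' [H _]]. eapply addr_of_val; eauto.
  - rewrite (lift_node ch Hr). reflexivity.
Qed.

Lemma lift_wc base s : embedded base s -> wc (lift base s).
Proof.
  revert base; induction s as [x|b ch IH]; intros base Em; [simpl; auto|].
  pose proof (embedded_root Em) as Hr. simpl in Hr. rewrite (lift_node ch Hr). simpl.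
  intros [[[l0 e0] pf] E]. simpl. apply (f_equal (@proj1_sig _ _)) in E. simpl in E.
  injection E. intros Eb El. subst l0.
  destruct (excluded_middle_informative _) as [h|h]; [|exfalso; auto].
  split.
  - apply sig_eq. rewrite lift_rc by (apply embedded_child; auto). reflexivity.
  - apply IH. apply embedded_child; auto.
Qed.

Lemma fmap_lift base s : embedded base s -> fmapT (addr_proj Wt) (lift base s) = s.
Proof.
  revert base; induction s as [x|b ch IH]; intros base Em.
  - simpl. f_equal. pose proof (embedded_root Em) as [t' [H E]]. simpl. subst x.
    apply addr_col_spec. rewrite (addr_of_val H). auto.
  - pose proof (embedded_root Em) as Hr. simpl in Hr. rewrite (lift_node ch Hr). rewrite fmapT_node.
    f_equal. apply functional_extensionality. intros e''.
    pose proof (@hinv_spec _ _ (addr_proj Wt) (exist _ (base,b) Hr : Addr1 tau) e'') as HS.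
    destruct (hinv (addr_proj Wt) (exist _ (base,b) Hr : Addr1 tau) e'') as [[[l0 e0] pf] E]. simpl in *.
    destruct (excluded_middle_informative _) as [h|h].
    2:{ exfalso. apply h. apply (f_equal (@proj1_sig _ _)) in E. simpl in E. injection E; auto. }
    rewrite IH by (apply embedded_child; auto). f_equal. apply fib_eq. simpl. auto.
Qed.

Lemma lift_addr_map base l t : at_addr tau (base ++ l) t ->
  map (fun e : Addr2 tau => snd (proj1_sig e)) (lift_addr base l) = l.
Proof.
  revert base; induction l as [|e l IH]; intros base H; simpl; auto.
  destruct (excluded_middle_informative _) as [Hv|Hv].
  - simpl. f_equal. apply IH. rewrite <- app_assoc. auto.
  - exfalso. apply Hv. replace (base ++ e :: l) with ((base ++ [e]) ++ l) in H by (rewrite <- app_assoc; auto).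
    apply at_addr_app in H. destruct H as [t1 [H _]]. eauto.
Qed.

Lemma embedded_sub base s l t : embedded base s -> at_addr s l t -> embedded (base ++ l) t.
Proof.
  intros Em H l' t' H'. destruct (Em (l ++ l') t') as [t'' [A1 A2]].
  - apply at_addr_app. eauto.
  - exists t''. rewrite <- app_assoc. auto.
Qed.

Lemma embedded_addr base s l t : embedded base s -> at_addr s l t -> exists t', at_addr tau (base ++ l) t'.
Proof. intros Em H. destruct (Em l t H) as [t' [A _]]. eauto. Qed.

End Lifting.

Lemma fin_sig_list (X : Type) (Q : X -> Prop) (L : list X) :
  exists L' : list {x | Q x}, forall y, In (proj1_sig y) L -> In y L'.
Proof.
  induction L as [|a L IH].
  - exists []. simpl. tauto.
  - destruct IH as [L' H]. destruct (excluded_middle_informative (Q a)) as [q|q].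
    + exists (exist _ a q :: L'). intros y [E|E].
      * left. apply sig_eq. simpl. auto.
      * right. auto.
    + exists L'. intros y [E|E]; auto. exfalso. apply q. rewrite E. apply proj2_sig.
Qed.

Lemma finite_inj (X Y : Type) (f : X -> Y) : (forall x y, f x = f y -> x = y) ->
  finite_type Y -> finite_type X.
Proof.
  intros Inj [LB HB].
  assert (K : forall LB, exists LA, forall x, In (f x) LB -> In x LA).
  { induction LB0 as [|y LB0 IH].
    - exists []. simpl. tauto.
    - destruct IH as [LA H]. destruct (excluded_middle_informative (exists x, f x = y)) as [q|q].
      + exists (proj1_sig (constructive_indefinite_description _ q) :: LA).
        destruct (constructive_indefinite_description _ q) as [x0 E]. simpl.
        intros x [E'|E']; auto. left. apply Inj. congruence.
      + exists LA. intros x [E'|E']; auto. exfalso. eauto. }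
  destruct (K LB) as [LA H]. exists LA. auto.
Qed.

Section Finiteness.
Variables (R : PolyEnd) (tau : ptree R).
Hypothesis FR : finitary R.

Lemma addr_finite (s : ptree R) : exists L, forall l t, at_addr s l t -> In l L.
Proof.
  induction s as [x|b ch IH].
  - exists [[]]. intros l t H. destruct l; simpl in H; [left; auto|tauto].
  - destruct (FR b) as [Lf Hf].
    assert (K : forall Lf, exists L, forall e (h : pp R e = b) l t, In e Lf ->
               at_addr (ch (exist _ e h)) l t -> In (e :: l) L).
    { induction Lf0 as [|e0 Lf0 IH2].
      - exists []. simpl. tauto.
      - destruct IH2 as [L H]. destruct (excluded_middle_informative (pp R e0 = b)) as [h0|h0].
        + destruct (IH (exist _ e0 h0)) as [L0 H0].
          exists (map (cons e0) L0 ++ L). intros e h l t [E|E] Ht; apply in_or_app.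
          * left. subst e0. apply in_map. eapply H0.
            assert (h = h0) by apply proof_irrelevance. subst. exact Ht.
          * right. eauto.
        + exists L. intros e h l t [E|E] Ht; [subst; tauto| eauto]. }
    destruct (K Lf) as [L H]. exists ([] :: L). intros l t Ht.
    destruct l as [|e l]; [left; auto|]. right. simpl in Ht. destruct Ht as [h Ht].
    eapply H; eauto.
Qed.

Lemma addr_poly_finitary : finitary (addr_poly tau).
Proof.
  intros [[l b] pf]. destruct (FR b) as [Lf Hf].
  destruct (fin_sig_list (fun le : list (P2 R) * P2 R => exists t, at_addr tau (fst le ++ [snd le]) t)
             (map (fun e => (l, e)) Lf)) as [L HL].
  exists L. intros [[l' e] pf'] E. apply HL. simpl.
  apply (f_equal (@proj1_sig _ _)) in E. simpl in E. injection E as -> Eb.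
  apply in_map. auto.
Qed.

Lemma Addr0_finite : finite_type (Addr0 tau).
Proof.
  destruct (addr_finite tau) as [L HL].
  destruct (fin_sig_list (fun l => exists t, at_addr tau l t) L) as [L' H'].
  exists L'. intros [l pf]. apply H'. simpl. destruct pf as [t Ht]. eapply HL; eauto.
Qed.

End Finiteness.

Lemma tree_finitary (T : PolyEnd) : is_tree T -> finitary T.
Proof. intros [_ [_ [[L HL] _]]] b. exists L. intros e _. apply HL. Qed.

Section Canonical.
Variables (S R : PolyEnd) (g : Hom S (F R)) (mu : ptree S).
Hypothesis tinj : forall b b', pt S b = pt S b' -> b = b'.
Hypothesis sinj : forall e e', ps S e = ps S e' -> e = e'.
Hypothesis Mmax : is_max_subtree mu.
Hypothesis Mcol : forall x, exists l t, at_addr mu l t /\ rc t = x.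

Definition mu_addr (x : P0 S) : list (P2 S) :=
  proj1_sig (constructive_indefinite_description _ (Mcol x)).

Lemma mu_addr_spec x : exists t, at_addr mu (mu_addr x) t /\ rc t = x.
Proof. unfold mu_addr. destruct (constructive_indefinite_description _ _) as [l H]. exact H. Qed.

Lemma mu_addr_eq l t x : at_addr mu l t -> rc t = x -> mu_addr x = l.
Proof.
  intros H E. destruct (mu_addr_spec x) as [t' [H' E']].
  eapply (addr_unique sinj (proj1 Mmax) (proj1 (proj2 Mmax)) H' H). congruence.
Qed.

Lemma mu_node b : exists ch, at_addr mu (mu_addr (pt S b)) (PNode b ch).
Proof.
  destruct (mu_addr_spec (pt S b)) as [t [H E]]. destruct t as [x|b' ch].
  - exfalso. simpl in E. eapply (max_leaf sinj (b:=b) Mmax H). auto.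
  - simpl in E. apply tinj in E. subst. eauto.
Qed.

Lemma mu_addr_child e : mu_addr (ps S e) = mu_addr (pt S (pp S e)) ++ [e].
Proof.
  destruct (mu_node (pp S e)) as [ch H]. eapply mu_addr_eq.
  - apply at_addr_app. exists (PNode (pp S e) ch). split; [exact H|]. simpl. exists eq_refl. reflexivity.
  - pose proof (proj1 Mmax) as W. apply (at_addr_wc W) in H. apply (H (exist _ e eq_refl)).
Qed.

Lemma mu_addr_root : mu_addr (rc mu) = [].
Proof. eapply mu_addr_eq; [reflexivity| auto]. Qed.

Definition image := ext g mu.
Lemma wc_image : wc image.
Proof. apply (ext_wc g (proj1 Mmax)). Qed.

(** The address in [image] at which the copy of [g b] starts. *)
Definition node_base b := gaddrs g (mu_addr (pt S b)).

Lemma embedded_gtree b : embedded image (node_base b) (gtree g b).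
Proof.
  destruct (mu_node b) as [ch H]. pose proof (ext_at_addr g H) as HE. rewrite ext_node in HE.
  intros l t Ht. pose proof (subst_at_addr (graft g ch) Ht) as Hs.
  exists (subst t (fun l' => graft g ch (l ++ l'))). split.
  - unfold image, node_base. apply at_addr_app. eauto.
  - destruct t as [x|b' ch'].
    + simpl. rewrite app_nil_r. destruct (gaddr_surj Ht) as [e [E1 E2]]. subst l.
      pose proof (graft_gaddr g ch (exist _ e E1)) as V. simpl in V. rewrite V.
      assert (W1 : wc (ch (exist _ e E1))).
      { pose proof (at_addr_wc (proj1 Mmax) H) as W. apply (W (exist _ e E1)). }
      rewrite (proj2 (ext_wc g W1)).
      pose proof (at_addr_wc (proj1 Mmax) H) as W. rewrite (proj1 (W (exist _ e E1))). simpl.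
      pose proof (gaddr_leaf g e) as L. rewrite E1 in L. pose proof (at_addr_det Ht L). congruence.
    + simpl. eauto.
Qed.

(** The components of [canon]: a colour goes to the address of its copy in [image], an
    operation [b] to [g b] lifted at [node_base b], an edge to the corresponding leaf. *)
Lemma canon0_pf x : exists t, at_addr image (gaddrs g (mu_addr x)) t.
Proof. destruct (mu_addr_spec x) as [t [H _]]. exists (ext g t). apply ext_at_addr. auto. Qed.

Definition canon0 (x : P0 S) : Addr0 image := exist _ (gaddrs g (mu_addr x)) (canon0_pf x).

Definition canon1 (b : P1 S) : FP1 (addr_poly image) := exist _ (lift image (node_base b) (gtree g b)) (lift_wc (embedded_gtree (b:=b))).

Lemma canon2_pf e : is_leaf (proj1_sig (fst (canon1 (pp S e), lift_addr image (node_base (pp S e)) (gaddr g e))))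
                        (snd (canon1 (pp S e), lift_addr image (node_base (pp S e)) (gaddr g e))).
Proof.
  simpl. apply is_leaf_at_addr. pose proof (lift_at_addr (embedded_gtree (b:=pp S e)) (gaddr_leaf g e)) as H.
  simpl in H. eauto.
Qed.

Definition canon2 (e : P2 S) : P2 (F (addr_poly image)) :=
  exist (fun x : FP1 (addr_poly image) * list (Addr2 image) => is_leaf (proj1_sig (fst x)) (snd x)) (canon1 (pp S e), lift_addr image (node_base (pp S e)) (gaddr g e)) (canon2_pf e).

Lemma base_child e : node_base (pp S e) ++ gaddr g e = gaddrs g (mu_addr (ps S e)).
Proof. unfold node_base. rewrite mu_addr_child, gaddrs_app. simpl. rewrite app_nil_r. reflexivity. Qed.

Lemma canon_s e : ps (F (addr_poly image)) (canon2 e) = canon0 (ps S e).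
Proof.
  simpl. rewrite (leafc_at_addr (lift_wc (embedded_gtree (b:=pp S e))) (lift_at_addr (embedded_gtree (b:=pp S e)) (gaddr_leaf g e))).
  simpl. apply sig_eq. simpl. rewrite <- base_child.
  destruct (canon0_pf (ps S e)) as [t Ht]. rewrite <- base_child in Ht. exact (addr_of_val Ht).
Qed.

Lemma canon_t b : pt (F (addr_poly image)) (canon1 b) = canon0 (pt S b).
Proof. apply sig_eq. simpl. rewrite lift_rc by apply embedded_gtree. reflexivity. Qed.

Lemma canon_pb b (e' : P2 (F (addr_poly image))) : pp (F (addr_poly image)) e' = canon1 b ->
  exists! e, pp S e = b /\ canon2 e = e'.
Proof.
  destruct e' as [[x q] L]. simpl. intros ->. simpl in L.
  pose proof L as L0. rewrite is_leaf_at_addr in L0. destruct L0 as [y L0].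
  destruct (lift_at_addr_inv (embedded_gtree (b:=b)) L0) as [l [t [Ht [-> Et]]]].
  destruct t as [z|b' ch'].
  2:{ exfalso. pose proof (embedded_root (embedded_sub (embedded_gtree (b:=b)) Ht)) as Hr. simpl in Hr.
      rewrite (lift_node ch' Hr) in Et. discriminate. }
  destruct (gaddr_surj Ht) as [e [E1 E2]]. exists e. split.
  - split; auto. apply sig_eq. simpl. subst b l. reflexivity.
  - intros e2 [F1 F2]. apply (f_equal (@proj1_sig _ _)) in F2. simpl in F2.
    injection F2 as _ F3. subst b. apply (gaddr_inj (g:=g)); auto.
    destruct (embedded_addr (embedded_gtree (b:=pp S e2)) (gaddr_leaf g e2)) as [t2 T2].
    destruct (embedded_addr (embedded_gtree (b:=pp S e)) Ht) as [t1 T1].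
    rewrite E2. rewrite <- (lift_addr_map T2). rewrite <- (lift_addr_map T1). rewrite F3. reflexivity.
Qed.

Definition canon : Hom S (F (addr_poly image)) := @mkHom S (F (addr_poly image)) canon0 canon1 canon2 canon_s (fun e => eq_refl) canon_t canon_pb.

Lemma canon_factors : Fcomp_eq (addr_proj wc_image) canon (id_hom R) g.
Proof.
  split; [|split].
  - intros x. simpl. destruct (mu_addr_spec x) as [t [H E]].
    rewrite (addr_col_spec (x:=canon0 x) (ext_at_addr g H)).
    rewrite (proj2 (ext_wc g (at_addr_wc (proj1 Mmax) H))). congruence.
  - intros b. unfold Fm1. simpl. rewrite fmap_lift by apply embedded_gtree. rewrite fmap_id. reflexivity.
  - intros e. unfold Fm2. simpl. rewrite fmap_lift by apply embedded_gtree. rewrite fmap_id.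
    rewrite map_id. rewrite (g2_tree g e). f_equal.
    destruct (embedded_addr (embedded_gtree (b:=pp S e)) (gaddr_leaf g e)) as [t T1].
    exact (lift_addr_map T1).
Qed.

Lemma image_node_in_gtree L b ch : at_addr image L (PNode b ch) ->
  exists bS Lrel ch', L = node_base bS ++ Lrel /\ at_addr (gtree g bS) Lrel (PNode b ch').
Proof.
  intros H. destruct (ext_at_addr_inv H) as [l [t0 [H0 [[x [_ [_ E]]] | [b0 [ch0 [L2 [b' [ch' [-> [-> [H2 E]]]]]]]]]]]].
  - discriminate.
  - simpl in E. injection E. intros _ ->. exists b0, L2, ch'. split; auto.
    unfold node_base. f_equal. f_equal. symmetry. eapply mu_addr_eq; eauto.
Qed.

End Canonical.

Section Naturality.
Variables (S C C' D : PolyEnd) (a : Hom S (F C)) (a' : Hom S (F C')) (c : Hom C D) (b : Hom C' D).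
Hypothesis FE : Fcomp_eq c a b a'.

Lemma square_gaddr e : map (h2 c) (gaddr a e) = map (h2 b) (gaddr a' e).
Proof. pose proof (proj2 (proj2 FE) e) as E. unfold Fm2 in E. injection E. auto. Qed.

Lemma square_gaddrs l : map (h2 c) (gaddrs a l) = map (h2 b) (gaddrs a' l).
Proof. induction l; simpl; auto. rewrite !map_app, square_gaddr, IHl. auto. Qed.

Lemma square_gtree bS : fmapT c (gtree a bS) = fmapT b (gtree a' bS).
Proof. exact (proj1 (proj2 FE) bS). Qed.

Lemma square_ext m : fmapT c (ext a m) = fmapT b (ext a' m).
Proof.
  apply ptree_ext. intros L t H.
  destruct (fmap_at_addr_inv H) as [l [t0 [-> [H0 ->]]]].
  destruct (ext_at_addr_inv H0) as [lS [s0 [HS [[x [-> [-> ->]]] | [bS [ch [L2 [beta [chb [-> [-> [H2 ->]]]]]]]]]]]].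
  - exists (fmapT b (ext a' (PLeaf x))). split.
    + rewrite square_gaddrs. apply fmap_at_addr. apply ext_at_addr. auto.
    + simpl. f_equal. apply (proj1 FE).
  - pose proof (fmap_at_addr c H2) as H3. rewrite square_gtree in H3.
    destruct (fmap_at_addr_inv H3) as [L2' [t2 [E2 [H4 E4]]]].
    apply (f_equal (@label _)) in E4. destruct t2 as [z|beta' ch2]; simpl in E4; [discriminate|].
    pose proof (ext_at_addr a' HS) as H5. rewrite ext_node in H5.
    pose proof (subst_at_addr (graft a' ch) H4) as H6.
    exists (fmapT b (subst (PNode beta' ch2) (fun l' => graft a' ch (L2' ++ l')))). split.
    + rewrite map_app, square_gaddrs, E2, <- map_app. apply fmap_at_addr. apply at_addr_app. eauto.
    + simpl. auto.
Qed.

End Naturality.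

(** Genericity of [canon]: given [F c o a = F b o canon], the filler [univ] sends an
    address of [image] to the label found at the corresponding address of [mu_a = a^#(mu)];
    addresses correspond via the tree [mu_canon = canon^#(mu)], whose images under [F b]
    and (through [mu_a]) [F c] agree. *)
Section CanonGeneric.
Variables (S T : PolyEnd) (g : Hom S (F T)) (mu : ptree S).
Hypothesis tinj : forall b b', pt S b = pt S b' -> b = b'.
Hypothesis sinj : forall e e', ps S e = ps S e' -> e = e'.
Hypothesis Mmax : is_max_subtree mu.
Hypothesis Mcol : forall x, exists l t, at_addr mu l t /\ rc t = x.

Local Notation image := (image g mu).
Local Notation AP := (addr_poly image).
Local Notation canon := (canon g tinj sinj Mmax Mcol).
Local Notation proj := (addr_proj (wc_image g Mmax)).

Variables (C D : PolyEnd) (a : Hom S (F C)) (c : Hom C D) (b : Hom AP D).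
Hypothesis FE : Fcomp_eq c a b canon.

Local Notation mu_canon := (ext canon mu).
Local Notation mu_a := (ext a mu).
Local Notation base h bS := (node_base h Mcol bS).
Local Notation embedded_gtree h := (embedded_gtree (g:=h) tinj sinj Mmax Mcol).

Lemma proj_ext_canon : fmapT proj mu_canon = image.
Proof. rewrite (square_ext (canon_factors g tinj sinj Mmax Mcol)). apply fmap_id. Qed.

Lemma square_ext_canon : fmapT c mu_a = fmapT b mu_canon.
Proof. apply (square_ext FE). Qed.

Lemma wc_ext_canon : wc mu_canon.
Proof. apply (ext_wc canon (proj1 Mmax)). Qed.

Lemma wc_ext_a : wc mu_a.
Proof. apply (ext_wc a (proj1 Mmax)). Qed.

Lemma ext_canon_root : proj1_sig (rc mu_canon) = [].
Proof. rewrite (proj2 (ext_wc canon (proj1 Mmax))). simpl. rewrite mu_addr_root; auto. Qed.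

Definition edge_of (e : P2 AP) : P2 T := snd (proj1_sig e).

Definition corr (l : list (P2 T)) (m : list (P2 C)) : Prop :=
  exists q tq tm, at_addr mu_canon q tq /\ map edge_of q = l /\ at_addr mu_a m tm /\ map (h2 c) m = map (h2 b) q.

Lemma corr_ex l t : at_addr image l t -> exists m, corr l m.
Proof.
  intros H. rewrite <- proj_ext_canon in H. destruct (fmap_at_addr_inv H) as [q [tq [-> [Hq _]]]].
  pose proof (fmap_at_addr b Hq) as H2. rewrite <- square_ext_canon in H2.
  destruct (fmap_at_addr_inv H2) as [m [tm [Em [Hm _]]]]. exists m, q, tq, tm. auto.
Qed.

Lemma ext_canon_addr_inj q1 q2 t1 t2 : at_addr mu_canon q1 t1 -> at_addr mu_canon q2 t2 -> map edge_of q1 = map edge_of q2 -> q1 = q2.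
Proof. intros H1 H2 E. exact (fmap_inj (c:=proj) H1 H2 E). Qed.

Lemma corr_fun l m1 m2 : corr l m1 -> corr l m2 -> m1 = m2.
Proof.
  intros [q1 [t1 [s1 [A1 [B1 [C1 D1]]]]]] [q2 [t2 [s2 [A2 [B2 [C2 D2]]]]]].
  assert (q1 = q2) by (eapply ext_canon_addr_inj; eauto; congruence). subst q2.
  eapply (fmap_inj (c:=c) C1 C2). congruence.
Qed.

Lemma corr_inj l1 l2 m : corr l1 m -> corr l2 m -> l1 = l2.
Proof.
  intros [q1 [t1 [s1 [A1 [B1 [C1 D1]]]]]] [q2 [t2 [s2 [A2 [B2 [C2 D2]]]]]].
  assert (q1 = q2) by (eapply (fmap_inj (c:=b) A1 A2); congruence). subst. auto.
Qed.

Lemma corr_app l1 l2 m : corr (l1 ++ l2) m ->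
  exists m1 m2, m = m1 ++ m2 /\ corr l1 m1 /\ length m1 = length l1.
Proof.
  intros [q [tq [tm [A1 [B1 [C1 D1]]]]]].
  destruct (map_eq_app _ _ _ _ B1) as [q1 [q2 [-> [E1 E2]]]].
  rewrite map_app in D1. destruct (map_eq_app _ _ _ _ D1) as [m1 [m2 [-> [Em1 Em2]]]].
  exists m1, m2. split; auto. split.
  - apply at_addr_app in A1. destruct A1 as [t1 [A1 _]]. apply at_addr_app in C1. destruct C1 as [s1 [C1 _]].
    exists q1, t1, s1. auto.
  - rewrite <- E1, <- (length_map (h2 c) m1), Em1, !length_map. auto.
Qed.

Lemma corr_len l m : corr l m -> length m = length l.
Proof.
  intros [q [tq [tm [A1 [B1 [C1 D1]]]]]]. rewrite <- B1, <- (length_map (h2 c) m), D1, !length_map. auto.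
Qed.

Lemma ext_canon_proj q tq t : at_addr mu_canon q tq -> at_addr image (map edge_of q) t -> fmapT proj tq = t.
Proof. intros H1 H2. pose proof (fmap_at_addr proj H1) as H3. rewrite proj_ext_canon in H3. exact (at_addr_det H3 H2). Qed.

Lemma ext_canon_labels q tq : at_addr mu_canon q tq -> proj1_sig (rc tq) = map edge_of q.
Proof. intros H. rewrite (addr_tree_labels wc_ext_canon H), ext_canon_root. reflexivity. Qed.

Lemma corr_label l m q tq tm : corr l m -> at_addr mu_canon q tq -> map edge_of q = l -> at_addr mu_a m tm ->
  fmapT c tm = fmapT b tq.
Proof.
  intros [q' [tq' [tm' [A1 [B1 [C1 D1]]]]]] Hq Eq Hm.
  assert (q' = q) by (eapply ext_canon_addr_inj; eauto; congruence). subst q'.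
  pose proof (fmap_at_addr c Hm) as H1. pose proof (fmap_at_addr b Hq) as H2. rewrite <- square_ext_canon in H2.
  rewrite D1 in H1. exact (at_addr_det H1 H2).
Qed.

Lemma corr_snoc l e0 m x : corr (l ++ [e0]) (m ++ [x]) -> corr l m.
Proof.
  intros H. pose proof (corr_len H) as Len. rewrite !length_app in Len. simpl in Len.
  destruct (corr_app H) as [m1 [m2 [E [H1 L1]]]].
  destruct (app_len_inv E) as [-> _]; [lia|]. auto.
Qed.

Lemma univ0_ex (x : Addr0 image) : exists y, exists m tm, corr (proj1_sig x) m /\ at_addr mu_a m tm /\ rc tm = y.
Proof.
  destruct x as [l [t H]]. simpl. destruct (corr_ex H) as [m Hm].
  pose proof Hm as [q [tq [tm [_ [_ [A _]]]]]]. eauto 6.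
Qed.

Lemma univ1_ex (n : Addr1 image) : exists y, exists m ch, corr (fst (proj1_sig n)) m /\ at_addr mu_a m (PNode y ch).
Proof.
  destruct n as [[L beta] [ch H]]. simpl. destruct (corr_ex H) as [m Hm].
  pose proof Hm as [q [tq [tm [A1 [B1 [C1 D1]]]]]].
  pose proof (corr_label Hm A1 B1 C1) as E. rewrite <- B1 in H. pose proof (ext_canon_proj A1 H) as E2.
  apply (f_equal (@label _)) in E2. destruct tq as [z|n0 chq]; simpl in E2; [discriminate|].
  apply (f_equal (@label _)) in E. destruct tm as [z|y chm]; simpl in E; [discriminate|].
  exists y, m, chm. auto.
Qed.

Lemma univ2_ex (e : Addr2 image) : exists x, exists m, corr (fst (proj1_sig e) ++ [snd (proj1_sig e)]) (m ++ [x]).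
Proof.
  destruct e as [[l e0] [t H]]. simpl in *. destruct (corr_ex H) as [m' Hm].
  pose proof (corr_len Hm) as Len. rewrite length_app in Len. simpl in Len.
  destruct m' as [|x m] using rev_ind; [simpl in Len; lia|]. eauto.
Qed.

Definition univ0 (x : Addr0 image) : P0 C := proj1_sig (constructive_indefinite_description _ (univ0_ex x)).
Definition univ1 (n : Addr1 image) : P1 C := proj1_sig (constructive_indefinite_description _ (univ1_ex n)).
Definition univ2 (e : Addr2 image) : P2 C := proj1_sig (constructive_indefinite_description _ (univ2_ex e)).

Lemma univ0_spec x m tm : corr (proj1_sig x) m -> at_addr mu_a m tm -> univ0 x = rc tm.
Proof.
  intros H1 H2. unfold univ0. destruct (constructive_indefinite_description _ _) as [y [m' [tm' [A [B E]]]]].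
  simpl. rewrite <- E. rewrite (corr_fun A H1) in B. rewrite (at_addr_det B H2). auto.
Qed.

Lemma univ1_spec n m y ch : corr (fst (proj1_sig n)) m -> at_addr mu_a m (PNode y ch) -> univ1 n = y.
Proof.
  intros H1 H2. unfold univ1. destruct (constructive_indefinite_description _ _) as [y' [m' [ch' [A B]]]].
  simpl. rewrite (corr_fun A H1) in B. pose proof (at_addr_det B H2) as E.
  apply (f_equal (@label _)) in E. simpl in E. congruence.
Qed.

Lemma univ2_spec e m x : corr (fst (proj1_sig e) ++ [snd (proj1_sig e)]) (m ++ [x]) -> univ2 e = x.
Proof.
  intros H1. unfold univ2. destruct (constructive_indefinite_description _ _) as [x' [m' A]].
  simpl. pose proof (corr_fun A H1) as E. apply app_inj_tail in E. destruct E; auto.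
Qed.

Lemma univ2_corr e : exists m, corr (fst (proj1_sig e) ++ [snd (proj1_sig e)]) (m ++ [univ2 e]).
Proof.
  unfold univ2. destruct (constructive_indefinite_description _ _) as [x' [m' A]]. simpl. eauto.
Qed.

Lemma univ_s e : ps C (univ2 e) = univ0 (addr_s e).
Proof.
  destruct (univ2_corr e) as [m H]. pose proof H as [q [tq [tm [_ [_ [A _]]]]]].
  rewrite (univ0_spec (x:=addr_s e) H A). symmetry. exact (at_addr_wc_rc wc_ext_a A).
Qed.

Lemma univ_p e : pp C (univ2 e) = univ1 (addr_p e).
Proof.
  destruct (univ2_corr e) as [m H]. pose proof H as [q [tq [tm [_ [_ [A _]]]]]].
  destruct (at_addr_last_parent A) as [ch P]. symmetry. apply (univ1_spec (n:=addr_p e) (corr_snoc H) P).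
Qed.

Lemma univ_t n : pt C (univ1 n) = univ0 (addr_t n).
Proof.
  unfold univ1. destruct (constructive_indefinite_description _ _) as [y [m [ch [A B]]]]. simpl.
  rewrite (univ0_spec (x:=addr_t n) A B). reflexivity.
Qed.

Lemma univ1_corr n : exists m ch, corr (fst (proj1_sig n)) m /\ at_addr mu_a m (PNode (univ1 n) ch).
Proof.
  unfold univ1. destruct (constructive_indefinite_description _ _) as [y [m [ch [A B]]]]. simpl. eauto.
Qed.

Lemma corr_extend L m x' ch : corr L m -> at_addr mu_a m (PNode (pp C x') ch) ->
  exists y t, corr (L ++ [y]) (m ++ [x']) /\ at_addr image (L ++ [y]) t.
Proof.
  intros Hm Am.
  assert (Ac : at_addr mu_a (m ++ [x']) (ch (exist _ x' eq_refl))).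
  { apply at_addr_app. exists (PNode (pp C x') ch). split; auto. simpl. exists eq_refl. reflexivity. }
  pose proof (fmap_at_addr c Ac) as H1. rewrite square_ext_canon in H1.
  destruct (fmap_at_addr_inv H1) as [q' [tq' [Eq' [Aq' _]]]].
  assert (Lq : length q' = length m + 1).
  { apply (f_equal (@length _)) in Eq'. rewrite !length_map, length_app in Eq'. simpl in Eq'. symmetry. exact Eq'. }
  destruct q' as [|y0 q0] using rev_ind; [simpl in Lq; lia|]. clear IHq0.
  pose proof (fmap_at_addr proj Aq') as Hl. rewrite proj_ext_canon in Hl.
  assert (Hc : corr (map edge_of (q0 ++ [y0])) (m ++ [x'])).
  { exists (q0 ++ [y0]), tq', (ch (exist _ x' eq_refl)). repeat split; auto. }
  rewrite map_app in Hc. cbn [map] in Hc.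
  assert (EL : map edge_of q0 = L) by (eapply corr_inj; [exact (corr_snoc Hc) | exact Hm]).
  change (map (h2 proj) (q0 ++ [y0])) with (map edge_of (q0 ++ [y0])) in Hl.
  rewrite map_app in Hl. cbn [map] in Hl. rewrite EL in Hc, Hl. eauto.
Qed.

Lemma univ_pb (n : Addr1 image) (x' : P2 C) : pp C x' = univ1 n ->
  exists! e : Addr2 image, addr_p e = n /\ univ2 e = x'.
Proof.
  intros Ex. destruct (univ1_corr n) as [m [ch [Hm Am]]]. revert ch Am. rewrite <- Ex. intros ch Am.
  destruct (corr_extend Hm Am) as [y [t [Hc Hl]]].
  assert (pf : exists t, at_addr image (fst (fst (proj1_sig n), y) ++ [snd (fst (proj1_sig n), y)]) t)
    by (simpl; eauto).
  exists (exist _ (fst (proj1_sig n), y) pf). split.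
  - split.
    + apply sig_eq. simpl. destruct n as [[L beta] [chn Hn]]. simpl in *. f_equal.
      destruct (at_addr_last_parent Hl) as [ch2 P2]. pose proof (at_addr_det P2 Hn) as E.
      apply (f_equal (@label _)) in E. simpl in E. congruence.
    + apply (univ2_spec (m:=m)). simpl. exact Hc.
  - intros [[L1 y1] pf1] [E1 E2]. apply sig_eq. simpl.
    apply (f_equal (@proj1_sig _ _)) in E1. simpl in E1.
    destruct n as [[L beta] [chn Hn]]. simpl in *. injection E1 as -> _.
    destruct (univ2_corr (exist _ (L, y1) pf1)) as [m1 H1]. simpl in H1. rewrite E2 in H1.
    rewrite (corr_fun (corr_snoc H1) Hm) in H1.
    pose proof (corr_inj H1 Hc) as E. apply app_inj_tail in E. destruct E as [_ ->]. auto.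
Qed.

Definition univ : Hom AP C := @mkHom AP C univ0 univ1 univ2 univ_s univ_p univ_t univ_pb.

(** [c o univ = b], componentwise: corresponding addresses carry the same labels in
    [F c (mu_a) = F b (mu_canon)], and [mu_canon] is labelled by its own addresses. *)
Lemma univ_comp0 x : h0 c (univ0 x) = h0 b x.
Proof.
  unfold univ0. destruct (constructive_indefinite_description _ _) as [y [m [tm [Hm [Am Ey]]]]].
  simpl. subst y. pose proof Hm as [q [tq [tm' [A1 [B1 [C1 D1]]]]]].
  pose proof (corr_label Hm A1 B1 Am) as E. apply (f_equal (@rc _)) in E. rewrite !fmap_rc in E.
  rewrite E. f_equal. apply sig_eq. rewrite (ext_canon_labels A1). auto.
Qed.

Lemma univ_comp1 n : h1 c (univ1 n) = h1 b n.
Proof.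
  unfold univ1. destruct (constructive_indefinite_description _ _) as [y [m [ch [Hm Am]]]].
  simpl. pose proof Hm as [q [tq [tm' [A1 [B1 [C1 D1]]]]]].
  pose proof (corr_label Hm A1 B1 Am) as E.
  destruct tq as [z|n' chq].
  { apply (f_equal (@label _)) in E. simpl in E. discriminate. }
  apply (f_equal (@label _)) in E. simpl in E. injection E as ->. f_equal.
  pose proof (proj2_sig n) as [chn Hn]. rewrite <- B1 in Hn.
  pose proof (ext_canon_proj A1 Hn) as E2. apply (f_equal (@label _)) in E2. simpl in E2. injection E2 as E2.
  pose proof (ext_canon_labels A1) as E3. simpl in E3.
  apply sig_eq. destruct n' as [[L' b'] pn']. destruct n as [[L b0] pn]. simpl in *. congruence.
Qed.

Lemma univ_comp2 e : h2 c (univ2 e) = h2 b e.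
Proof.
  destruct (univ2_corr e) as [m Hm].
  pose proof Hm as [q [tq [tm' [A1 [B1 [C1 D1]]]]]].
  destruct q as [|y0 q0] using rev_ind.
  { apply (f_equal (@length _)) in D1. rewrite length_map, length_app in D1. simpl in D1. lia. }
  clear IHq0. rewrite !map_app in D1. simpl in D1. apply app_inj_tail in D1. destruct D1 as [_ ->].
  f_equal. rewrite <- (app_nil_r (q0 ++ [y0])) in A1. rewrite <- app_assoc in A1. simpl in A1.
  pose proof (addr_tree_edge wc_ext_canon A1) as E. rewrite ext_canon_root in E. simpl in E.
  rewrite map_app in B1. simpl in B1. apply app_inj_tail in B1. destruct B1 as [B1 B2].
  apply sig_eq. rewrite E. destruct e as [[l e0] pf]. simpl in *. f_equal; [exact B1 | exact B2].
Qed.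

Lemma univ_comp : comp_eq c univ b.
Proof. split; [|split]; intros; simpl; [apply univ_comp0 | apply univ_comp1 | apply univ_comp2]. Qed.

Lemma edge_of_gaddr e : map edge_of (gaddr canon e) = gaddr g e.
Proof.
  destruct (embedded_addr (embedded_gtree g (b:=pp S e)) (gaddr_leaf g e)) as [t T1].
  exact (lift_addr_map T1).
Qed.

Lemma edge_of_gaddrs l : map edge_of (gaddrs canon l) = gaddrs g l.
Proof. induction l; simpl; auto. rewrite map_app. f_equal; [apply edge_of_gaddr | exact IHl]. Qed.

Lemma corr_gaddrs lS t : at_addr mu lS t -> corr (gaddrs g lS) (gaddrs a lS).
Proof.
  intros H. exists (gaddrs canon lS), (ext canon t), (ext a t). split; [apply ext_at_addr; auto|].
  split; [apply edge_of_gaddrs|]. split; [apply ext_at_addr; auto|]. apply (square_gaddrs FE).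
Qed.

Lemma univ2_map q' : forall Q0 M0 M tq, at_addr mu_canon (Q0 ++ q') tq -> corr (map edge_of Q0) M0 ->
  corr (map edge_of (Q0 ++ q')) (M0 ++ M) -> length M = length q' -> map univ2 q' = M.
Proof.
  induction q' as [|y q'' IH]; intros Q0 M0 M tq A H0 H1 Len.
  - destruct M; simpl in *; auto; discriminate.
  - destruct M as [|x M']; simpl in Len; [discriminate|]. simpl.
    assert (Ey : proj1_sig y = (map edge_of Q0, edge_of y)).
    { pose proof (addr_tree_edge wc_ext_canon A) as E. rewrite ext_canon_root in E. simpl in E. exact E. }
    assert (Hc : corr (map edge_of (Q0 ++ [y])) (M0 ++ [x])).
    { replace (Q0 ++ y :: q'') with ((Q0 ++ [y]) ++ q'') in H1 by (rewrite <- app_assoc; auto).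
      rewrite map_app in H1. destruct (corr_app H1) as [m1 [m2 [E [Hm1 L1]]]].
      pose proof (corr_len H0) as L0.
      replace (M0 ++ x :: M') with ((M0 ++ [x]) ++ M') in E by (rewrite <- app_assoc; auto).
      destruct (app_len_inv E) as [<- _]; [|exact Hm1].
      rewrite L1, map_app, !length_app, <- L0. reflexivity. }
    f_equal.
    + apply univ2_spec with (m := M0). rewrite Ey. simpl. rewrite map_app in Hc. exact Hc.
    + apply (IH (Q0 ++ [y]) (M0 ++ [x]) M' tq); auto.
      * rewrite <- app_assoc. exact A.
      * rewrite <- !app_assoc. exact H1.
Qed.

Lemma gtree_corr bS q' t0 : at_addr (gtree canon bS) q' t0 ->
  exists M t', at_addr (gtree a bS) M t' /\ fmapT c t' = fmapT b t0 /\ map univ2 q' = M /\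
    corr (map edge_of (base canon bS ++ q')) (base a bS ++ M).
Proof.
  intros Aq.
  pose proof (fmap_at_addr b Aq) as H1. rewrite <- (square_gtree FE bS) in H1.
  destruct (fmap_at_addr_inv H1) as [M [t' [EM [AM Et]]]].
  destruct (embedded_gtree canon Aq) as [s1 [A1 _]].
  destruct (embedded_gtree a AM) as [s2 [A2 _]].
  assert (Hc : corr (map edge_of (base canon bS ++ q')) (base a bS ++ M)).
  { exists (base canon bS ++ q'), s1, s2. split; [exact A1|]. split; [reflexivity|]. split; [exact A2|].
    unfold node_base. rewrite !map_app, (square_gaddrs FE), EM. reflexivity. }
  assert (H0 : corr (map edge_of (base canon bS)) (base a bS)).
  { unfold node_base. rewrite edge_of_gaddrs.
    destruct (mu_addr_spec Mcol (pt S bS)) as [tt [Htt _]]. exact (corr_gaddrs Htt). }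
  assert (LM : length M = length q').
  { apply (f_equal (@length _)) in EM. rewrite !length_map in EM. symmetry. exact EM. }
  exists M, t'. repeat split; auto. exact (univ2_map A1 H0 Hc LM).
Qed.

Lemma univ_gtree bS : fmapT univ (gtree canon bS) = gtree a bS.
Proof.
  apply ptree_ext. intros Q t HQ.
  destruct (fmap_at_addr_inv HQ) as [q' [t0 [-> [Aq ->]]]].
  destruct (gtree_corr Aq) as [M [t' [AM [Et [EM Hc]]]]].
  change (map (h2 univ) q') with (map univ2 q'). rewrite EM.
  exists t'. split; [exact AM|].
  destruct (embedded_gtree a AM) as [s2 [A2 L2]].
  assert (Rt0 : proj1_sig (rc t0) = map edge_of (base canon bS ++ q')).
  { rewrite (addr_tree_labels (gtree_wc _ _) Aq), map_app. f_equal.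
    unfold node_base. rewrite edge_of_gaddrs. exact (lift_rc (embedded_gtree g (b:=bS))). }
  destruct t0 as [z|n ch0], t' as [w|y ch']; simpl in Et; try discriminate; simpl; f_equal.
  - rewrite (univ0_spec (x:=z) (eq_ind _ (fun L => corr L _) Hc _ (eq_sym Rt0)) A2). exact L2.
  - destruct L2 as [ch'' ->].
    exact (univ1_spec (n:=n) (eq_ind _ (fun L => corr L _) Hc _ (eq_sym Rt0)) A2).
Qed.

Lemma univ_factors : Fcomp_eq1 univ canon a.
Proof.
  split; [|split].
  - intros x. simpl. destruct (mu_addr_spec Mcol x) as [t [H E]].
    pose proof (corr_gaddrs H) as Hc. pose proof (ext_at_addr a H) as Ha.
    change (univ0 (canon0 g Mcol x) = h0 a x). rewrite (univ0_spec (x:=canon0 g Mcol x) Hc Ha).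
    rewrite (proj2 (ext_wc a (at_addr_wc (proj1 Mmax) H))). congruence.
  - intros x. unfold Fm1, raw1. apply univ_gtree.
  - intros e. unfold Fm2, raw2. rewrite (g2_tree canon e), (g2_tree a e). f_equal.
    + apply univ_gtree.
    + set (lS := mu_addr Mcol (pt S (pp S e))).
      assert (Eg : forall X (h : Hom S (F X)), gaddrs h lS ++ gaddr h e = gaddrs h (mu_addr Mcol (ps S e))).
      { intros X h. unfold lS. rewrite (mu_addr_child tinj sinj Mmax Mcol e), gaddrs_app. simpl. rewrite app_nil_r. auto. }
      destruct (mu_addr_spec Mcol (ps S e)) as [t [H _]].
      destruct (mu_addr_spec Mcol (pt S (pp S e))) as [t0 [H0 _]].
      change (map univ2 (gaddr canon e) = gaddr a e).
      apply (univ2_map (Q0 := gaddrs canon lS) (M0 := gaddrs a lS) (tq := ext canon t)).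
      * rewrite Eg. apply ext_at_addr. auto.
      * rewrite edge_of_gaddrs. exact (corr_gaddrs H0).
      * rewrite !Eg, edge_of_gaddrs. exact (corr_gaddrs H).
      * pose proof (square_gaddr FE e) as E. apply (f_equal (@length _)) in E. rewrite !length_map in E. exact E.
Qed.

Lemma addr_node_in_canon (n : Addr1 image) : exists bS q ch, at_addr (gtree canon bS) q (@PNode AP n ch).
Proof.
  destruct n as [[L beta] pf]. pose proof pf as [chn Hn]. simpl in Hn.
  destruct (image_node_in_gtree sinj Mmax Mcol Hn) as [bS [Lrel [ch' [EL Hrel]]]].
  pose proof (lift_at_addr (embedded_gtree g (b:=bS)) Hrel) as HL.
  pose proof (embedded_root (embedded_sub (embedded_gtree g (b:=bS)) Hrel)) as Hr. simpl in Hr.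
  rewrite (lift_node ch' Hr) in HL. exists bS. eexists. eexists.
  replace (exist _ (base g bS ++ Lrel, beta) Hr : Addr1 image) with
          (exist _ (L, beta) pf : Addr1 image) in HL by (apply sig_eq; simpl; rewrite EL; reflexivity).
  exact HL.
Qed.

(** Uniqueness of the filler: two fillers agree on nodes, since nodes occur in the
    lifted trees whose images are fixed; on edges by the pullback property of [c]; and
    on colours, which are the root colour or sources of edges. *)
Section Uniqueness.
Variables u1 u2 : Hom AP C.
Hypotheses (C1 : comp_eq c u1 b) (G1 : Fcomp_eq1 u1 canon a).
Hypotheses (C2 : comp_eq c u2 b) (G2 : Fcomp_eq1 u2 canon a).

Lemma univ_unique1 n : h1 u1 n = h1 u2 n.
Proof.
  destruct (addr_node_in_canon n) as [bS [q [ch H]]].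
  pose proof (fmap_at_addr u1 H) as H1. pose proof (fmap_at_addr u2 H) as H2.
  pose proof (proj1 (proj2 G1) bS) as E1. pose proof (proj1 (proj2 G2) bS) as E2.
  unfold Fm1, raw1 in E1, E2. change (proj1_sig (h1 canon bS)) with (gtree canon bS) in E1, E2.
  rewrite E1 in H1. rewrite E2 in H2.
  assert (Eq : map (h2 u1) q = map (h2 u2) q).
  { eapply (fmap_inj (c:=c) H1 H2). rewrite !map_map. apply map_ext. intros e.
    rewrite (proj2 (proj2 C1) e), (proj2 (proj2 C2) e). reflexivity. }
  rewrite Eq in H1. pose proof (at_addr_det H1 H2) as E. apply (f_equal (@label _)) in E.
  simpl in E. congruence.
Qed.

Lemma univ_unique2 e : h2 u1 e = h2 u2 e.
Proof.
  pose proof (h_p u1 e) as P1. pose proof (h_p u2 e) as P2. rewrite univ_unique1 in P1.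
  destruct (h_pb c (pp C (h2 u1 e)) (h2 c (h2 u1 e)) (h_p c _)) as [x [_ Ux]].
  rewrite <- (Ux (h2 u1 e) (conj eq_refl eq_refl)). apply Ux. split.
  - congruence.
  - rewrite (proj2 (proj2 C1) e), (proj2 (proj2 C2) e). reflexivity.
Qed.

Lemma univ_unique0 x : h0 u1 x = h0 u2 x.
Proof.
  destruct (proj1_sig x) as [|e0 l] eqn:Ex using rev_ind.
  - assert (x = canon0 g Mcol (rc mu)) as ->.
    { apply sig_eq. rewrite Ex. simpl. rewrite mu_addr_root; auto. }
    change (h0 u1 (h0 canon (rc mu)) = h0 u2 (h0 canon (rc mu))).
    rewrite (proj1 G1), (proj1 G2). reflexivity.
  - clear IHl. pose proof (proj2_sig x) as pf. simpl in pf. rewrite Ex in pf.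
    set (e := exist (fun le : list (P2 T) * P2 T => exists t, at_addr image (fst le ++ [snd le]) t) (l, e0) pf : Addr2 image).
    assert (x = addr_s e) as -> by (apply sig_eq; simpl; auto).
    change (h0 u1 (ps AP e) = h0 u2 (ps AP e)). rewrite <- !h_s. rewrite univ_unique2. reflexivity.
Qed.

Lemma univ_unique : hom_eq u1 u2.
Proof. split; [exact univ_unique0 | split; [exact univ_unique1 | exact univ_unique2]]. Qed.

End Uniqueness.

End CanonGeneric.

(** Genericity is invariant under isomorphism of the target: if [F p o a' = g] for an
    isomorphism [p : A -> T] with inverse [j], squares for [g] are squares for [a']
    (precompose [b] with [p]), and fillers are transported by [j] and [p]. *)
Section Transfer.
Variables (S A T : PolyEnd) (a' : Hom S (F A)) (g : Hom S (F T)) (p : Hom A T) (j : Hom T A).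
Hypothesis Hl : hom_eq (comp_hom p j) (id_hom T).
Hypothesis Hr : hom_eq (comp_hom j p) (id_hom A).
Hypothesis Fp : Fcomp_eq p a' (id_hom T) g.

Lemma factor0 x : h0 p (h0 a' x) = h0 g x.
Proof. rewrite (proj1 Fp). reflexivity. Qed.

Lemma factor1 x : fmapT p (proj1_sig (h1 a' x)) = proj1_sig (h1 g x).
Proof. pose proof (proj1 (proj2 Fp) x) as E. unfold Fm1 in E. rewrite fmap_id in E. exact E. Qed.

Lemma factor2 x : fmapT p (fst (raw2 (h2 a' x))) = fst (raw2 (h2 g x)) /\
                  map (h2 p) (snd (raw2 (h2 a' x))) = snd (raw2 (h2 g x)).
Proof.
  pose proof (proj2 (proj2 Fp) x) as E. unfold Fm2 in E. rewrite fmap_id, map_id in E.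
  injection E. auto.
Qed.

Lemma fmap_j_p s : fmapT j (fmapT p s) = s.
Proof. rewrite <- fmap_comp, (fmap_homeq s Hr). apply fmap_id. Qed.

Variables (C D : PolyEnd) (a : Hom S (F C)) (c : Hom C D) (b : Hom T D).

Lemma transfer_square : Fcomp_eq c a b g -> Fcomp_eq c a (comp_hom b p) a'.
Proof.
  intros [E0 [E1 E2]]. split; [|split].
  - intros x. simpl. rewrite factor0. auto.
  - intros x. rewrite E1. unfold Fm1. rewrite fmap_comp. f_equal. symmetry. apply factor1.
  - intros x. rewrite E2. unfold Fm2. destruct (factor2 x) as [Q1 Q2]. simpl in Q1, Q2. f_equal.
    + rewrite fmap_comp, Q1. reflexivity.
    + change (h2 (comp_hom b p)) with (fun e => h2 b (h2 p e)).
      rewrite <- (map_map (h2 p) (h2 b)), Q2. reflexivity.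
Qed.

Lemma transfer_comp (u' : Hom A C) : comp_eq c u' (comp_hom b p) -> comp_eq c (comp_hom u' j) b.
Proof.
  destruct Hl as [L0 [L1 L2]]. simpl in L0, L1, L2.
  intros [C0 [C1 C2]]. split; [|split]; intros y; simpl.
  - rewrite C0. simpl. rewrite L0. auto.
  - rewrite C1. simpl. rewrite L1. auto.
  - rewrite C2. simpl. rewrite L2. auto.
Qed.

Lemma transfer_factor (u' : Hom A C) : Fcomp_eq1 u' a' a -> Fcomp_eq1 (comp_hom u' j) g a.
Proof.
  destruct Hr as [R0 [R1 R2]]. simpl in R0, R1, R2.
  intros [G0 [G1 G2]]. split; [|split].
  - intros x. simpl. rewrite <- factor0, R0. apply G0.
  - intros x. unfold Fm1. rewrite fmap_comp, <- factor1, fmap_j_p. apply G1.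
  - intros x. destruct (factor2 x) as [Q1 Q2]. simpl in Q1, Q2.
    rewrite <- (G2 x). unfold Fm2. f_equal.
    + rewrite fmap_comp. f_equal. rewrite <- Q1. apply fmap_j_p.
    + rewrite <- Q2, map_map. apply map_ext. intros; simpl; rewrite R2; auto.
Qed.

Lemma transfer_back (u'' : Hom T C) : comp_eq c u'' b -> Fcomp_eq1 u'' g a ->
  comp_eq c (comp_hom u'' p) (comp_hom b p) /\ Fcomp_eq1 (comp_hom u'' p) a' a.
Proof.
  intros [C0 [C1 C2]] [G0 [G1 G2]]. split.
  - split; [|split]; intros y; simpl; auto.
  - split; [|split].
    + intros x. simpl. rewrite factor0. apply G0.
    + intros x. unfold Fm1. rewrite fmap_comp, factor1. apply G1.
    + intros x. unfold Fm2. rewrite fmap_comp.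
      change (h2 (comp_hom u'' p)) with (fun e => h2 u'' (h2 p e)). rewrite <- map_map.
      destruct (factor2 x) as [Q1 Q2]. simpl in Q1, Q2. rewrite Q1, Q2. apply G2.
Qed.

Lemma transfer_unique (u' : Hom A C) (u'' : Hom T C) :
  hom_eq (comp_hom u'' p) u' -> hom_eq u'' (comp_hom u' j).
Proof.
  destruct Hl as [L0 [L1 L2]]. simpl in L0, L1, L2.
  intros [W0 [W1 W2]]. simpl in W0, W1, W2.
  split; [|split]; intros y; simpl.
  - rewrite <- W0, L0. auto.
  - rewrite <- W1, L1. auto.
  - rewrite <- W2, L2. auto.
Qed.

End Transfer.

Lemma generic_iso_transfer (S A T : PolyEnd) (a' : Hom S (F A)) (g : Hom S (F T)) (p : Hom A T) (j : Hom T A) :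
  generic a' -> hom_eq (comp_hom p j) (id_hom T) -> hom_eq (comp_hom j p) (id_hom A) ->
  Fcomp_eq p a' (id_hom T) g -> generic g.
Proof.
  intros Ga Hl Hr Fp C D FC FD a c b FE.
  destruct (Ga C D FC FD a c (comp_hom b p) (transfer_square Fp FE)) as [u' [Cu [Fu Uu]]].
  exists (comp_hom u' j). split; [|split].
  - exact (transfer_comp Hl Cu).
  - exact (transfer_factor Hr Fp Fu).
  - intros u'' Cu'' Fu''. destruct (transfer_back Fp Cu'' Fu'') as [Cb Fb].
    exact (transfer_unique Hl (Uu _ Cb Fb)).
Qed.

Lemma canon_generic (S T : PolyEnd) (g : Hom S (F T)) (mu : ptree S)
    (tinj : forall b b', pt S b = pt S b' -> b = b') (sinj : forall e e', ps S e = ps S e' -> e = e')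
    (Mmax : is_max_subtree mu) (Mcol : forall x, exists l t, at_addr mu l t /\ rc t = x) :
  generic (canon g tinj sinj Mmax Mcol).
Proof.
  intros C D FC FD a c b FE. exists (univ FE). split; [apply univ_comp|]. split; [apply univ_factors|].
  intros u' C' F'. apply (univ_unique C' F' (univ_comp FE) (univ_factors FE)).
Qed.

(** When [tau] is the maximal subtree of a tree [T], its address polynomial is [T]
    itself: [addr_proj] is bijective, since addresses are unique and every node, edge
    and colour occurs in [tau]. *)
Section MaximalImage.
Variables (T : PolyEnd) (tau : ptree T) (Wt : wc tau).
Hypothesis sinjT : forall e e', ps T e = ps T e' -> e = e'.
Hypothesis Troot : forall x y, is_root T x -> is_root T y -> x = y.
Hypothesis Tmax : is_max_subtree tau.

Local Notation PI := (addr_proj Wt).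

Lemma addr_proj_inj0 (x y : Addr0 tau) : h0 PI x = h0 PI y -> x = y.
Proof.
  destruct x as [l1 pf1], y as [l2 pf2]. pose proof pf1 as [t1 H1]. pose proof pf2 as [t2 H2].
  simpl. rewrite (addr_col_spec (x:=exist _ l1 pf1) H1), (addr_col_spec (x:=exist _ l2 pf2) H2). intros E.
  apply sig_eq. simpl. exact (addr_unique sinjT (proj1 Tmax) (proj1 (proj2 Tmax)) H1 H2 E).
Qed.

Lemma addr_proj_inj1 (x y : Addr1 tau) : h1 PI x = h1 PI y -> x = y.
Proof.
  destruct x as [[l1 b1] [c1 H1]], y as [[l2 b2] [c2 H2]]. simpl in *. intros ->.
  assert (l1 = l2) as -> by (exact (addr_unique sinjT (proj1 Tmax) (proj1 (proj2 Tmax)) H1 H2 eq_refl)).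
  apply sig_eq. auto.
Qed.

Lemma addr_proj_inj2 (x y : Addr2 tau) : h2 PI x = h2 PI y -> x = y.
Proof.
  destruct x as [[l1 e1] [t1 H1]], y as [[l2 e2] [t2 H2]]. simpl in *. intros ->.
  pose proof (at_addr_wc_rc Wt H1) as R1. pose proof (at_addr_wc_rc Wt H2) as R2.
  pose proof (addr_unique sinjT (proj1 Tmax) (proj1 (proj2 Tmax)) H1 H2 (eq_trans R1 (eq_sym R2))) as E.
  apply app_inj_tail in E. destruct E as [-> _]. apply sig_eq. auto.
Qed.

Lemma addr_proj_surj1 (y : P1 T) : exists x, h1 PI x = y.
Proof.
  destruct (node_in_at_addr (proj2 (proj2 Tmax) y)) as [l [ch H]].
  exists (exist (fun lb : list (P2 T) * P1 T => exists ch, at_addr tau (fst lb) (PNode (snd lb) ch)) (l, y) (ex_intro _ ch H)).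
  reflexivity.
Qed.

Lemma child_at_addr l e ch : at_addr tau l (PNode (pp T e) ch) -> at_addr tau (l ++ [e]) (ch (exist _ e eq_refl)).
Proof. intros H. apply at_addr_app. eexists. split; [exact H|]. simpl. exists eq_refl. reflexivity. Qed.

Lemma addr_proj_surj2 (y : P2 T) : exists x, h2 PI x = y.
Proof.
  destruct (node_in_at_addr (proj2 (proj2 Tmax) (pp T y))) as [l [ch H]].
  exists (exist (fun le : list (P2 T) * P2 T => exists t, at_addr tau (fst le ++ [snd le]) t) (l, y)
           (ex_intro _ _ (child_at_addr H))).
  reflexivity.
Qed.

Lemma addr_proj_surj0 (y : P0 T) : exists x, h0 PI x = y.
Proof.
  destruct (excluded_middle_informative (exists e, ps T e = y)) as [[e E]|N].
  - destruct (node_in_at_addr (proj2 (proj2 Tmax) (pp T e))) as [l [ch H]].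
    pose proof (child_at_addr H) as H2.
    exists (exist (fun l => exists t, at_addr tau l t) (l ++ [e]) (ex_intro _ _ H2)).
    transitivity (rc (ch (exist _ e eq_refl))); [apply addr_col_spec; exact H2|].
    rewrite (at_addr_wc_rc Wt H2). auto.
  - exists (exist (fun l => exists t, at_addr tau l t) [] (ex_intro _ tau eq_refl)).
    transitivity (rc tau); [apply addr_col_spec; reflexivity|].
    apply Troot; [apply (proj1 (proj2 Tmax))|]. intros [e E]. apply N. eauto.
Qed.

Lemma addr_proj_iso : exists j : Hom T (addr_poly tau),
  hom_eq (comp_hom PI j) (id_hom T) /\ hom_eq (comp_hom j PI) (id_hom (addr_poly tau)).
Proof.
  exists (@inv_hom (addr_poly tau) T PI addr_proj_inj0 addr_proj_inj1 addr_proj_inj2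
            addr_proj_surj0 addr_proj_surj1 addr_proj_surj2).
  split; [apply inv_left | apply inv_right].
Qed.

End MaximalImage.

Theorem boundary_preserving_generic : forall (S T : PolyEnd), is_tree S -> is_tree T ->
     forall g : Hom S (F T), boundary_preserving g -> generic g.
Proof.
  intros S T TS TT g BP.
  destruct (tree_max_subtree TS) as [mu [Mmax Mcol]].
  pose proof TS as [_ [_ [_ [tinj [sinj _]]]]].
  pose proof TT as [_ [_ [_ [_ [sinjT [[r [_ Ru]] _]]]]]].
  assert (Troot : forall x y, is_root T x -> is_root T y -> x = y)
    by (intros x y Hx Hy; rewrite (Ru _ Hx), (Ru _ Hy); auto).
  destruct (addr_proj_iso (wc_image g Mmax) sinjT Troot (BP mu Mmax)) as [j [Hl Hr]].
  apply (generic_iso_transfer (@canon_generic S T g mu tinj sinj Mmax Mcol) Hl Hr).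
  apply canon_factors.
Qed.

(** Conversely, let [g] be generic, applied to the square [F(addr_proj) o canon = g]:
    this yields [u : R -> addr_poly image], a section of [addr_proj] with
    [F u o g = canon]. *)
Section Converse.
Variables (S R : PolyEnd) (g : Hom S (F R)) (mu : ptree S).
Hypothesis tinj : forall b b', pt S b = pt S b' -> b = b'.
Hypothesis sinj : forall e e', ps S e = ps S e' -> e = e'.
Hypothesis Mmax : is_max_subtree mu.
Hypothesis Mcol : forall x, exists l t, at_addr mu l t /\ rc t = x.
Hypothesis FR : finitary R.

Local Notation image := (image g mu).
Local Notation wc_image := (wc_image g Mmax).
Local Notation canon := (canon g tinj sinj Mmax Mcol).
Local Notation image_node_in_gtree := (image_node_in_gtree sinj Mmax Mcol).
Local Notation embedded_gtree := (embedded_gtree (g:=g) tinj sinj Mmax Mcol).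
Local Notation mu_addr_root := (mu_addr_root sinj Mmax Mcol).

Variable u : Hom R (addr_poly image).
Hypothesis Hc : comp_eq (addr_proj wc_image) u (id_hom R).
Hypothesis Hf : Fcomp_eq1 u g canon.

(** The root colour of [image], a candidate root of [R]. *)
Local Notation r0 := (h0 g (rc mu)).

(** [u] is injective, being a section of [addr_proj]. *)
Lemma u0_inj x y : h0 u x = h0 u y -> x = y.
Proof. intros E. pose proof (proj1 Hc x) as A. pose proof (proj1 Hc y) as B. simpl in A, B. rewrite E in A. congruence. Qed.
Lemma u1_inj x y : h1 u x = h1 u y -> x = y.
Proof. intros E. pose proof (proj1 (proj2 Hc) x) as A. pose proof (proj1 (proj2 Hc) y) as B. simpl in A, B. rewrite E in A. congruence. Qed.
Lemma u2_inj x y : h2 u x = h2 u y -> x = y.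
Proof. intros E. pose proof (proj2 (proj2 Hc) x) as A. pose proof (proj2 (proj2 Hc) y) as B. simpl in A, B. rewrite E in A. congruence. Qed.

(** Every node address of [image] lies in a lifted [g b], hence, by [F u o g = canon],
    is hit by [u]. *)
Lemma u1_surj (n : Addr1 image) : exists b, h1 u b = n.
Proof.
  destruct n as [[L b] pf]. pose proof pf as [ch H]. simpl in H.
  destruct (image_node_in_gtree H) as [bS [Lrel [ch' [EL Hrel]]]].
  pose proof (lift_at_addr (embedded_gtree (b:=bS)) Hrel) as HL.
  pose proof (embedded_root (embedded_sub (embedded_gtree (b:=bS)) Hrel)) as Hr. simpl in Hr.
  rewrite (lift_node ch' Hr) in HL.
  pose proof (proj1 (proj2 Hf) bS) as E1. unfold Fm1, raw1 in E1. simpl in E1.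
  change (proj1_sig (h1 g bS)) with (gtree g bS) in E1. rewrite <- E1 in HL.
  destruct (fmap_at_addr_inv HL) as [l [t [_ [_ Et]]]].
  apply (f_equal (@label _)) in Et. destruct t as [z|b0 ch0]; simpl in Et; [discriminate|].
  injection Et as Et. exists b0. rewrite <- Et. apply sig_eq. simpl. rewrite EL. reflexivity.
Qed.

(** Edge addresses are then hit as well, by the pullback property of [u]. *)
Lemma u2_surj (e' : Addr2 image) : exists e, h2 u e = e'.
Proof.
  destruct (u1_surj (addr_p e')) as [b Eb].
  destruct (h_pb u b e' (eq_sym Eb)) as [e [[_ E] _]]. eauto.
Qed.

Lemma u_root_addr : proj1_sig (h0 u r0) = [].
Proof. rewrite (proj1 Hf). simpl. rewrite mu_addr_root. reflexivity. Qed.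

Lemma u_empty_addr x : proj1_sig (h0 u x) = [] -> x = r0.
Proof. intros E. apply u0_inj, sig_eq. rewrite E, u_root_addr. reflexivity. Qed.

Lemma image_root : is_root R r0.
Proof.
  intros [e E]. pose proof (h_s u e) as Hs. rewrite E in Hs.
  apply (f_equal (@proj1_sig _ _)) in Hs. rewrite u_root_addr in Hs. simpl in Hs.
  destruct (fst (proj1_sig (h2 u e))); discriminate.
Qed.

(** A colour whose address ends with an edge is the source of the corresponding edge
    of [R]; one [sigma]-step shortens its address. *)
Lemma u_nonroot_step x l e0 : proj1_sig (h0 u x) = l ++ [e0] ->
  exists e, ps R e = x /\ proj1_sig (h0 u (pt R (pp R e))) = l.
Proof.
  intros E. pose proof (proj2_sig (h0 u x)) as pf. simpl in pf. rewrite E in pf.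
  destruct (u2_surj (exist (fun le : list (P2 R) * P2 R => exists t, at_addr image (fst le ++ [snd le]) t) (l, e0) pf))
    as [e Ee].
  exists e. split.
  - apply u0_inj. rewrite <- h_s. rewrite Ee. apply sig_eq. simpl. auto.
  - rewrite <- h_t. rewrite <- h_p. rewrite Ee. reflexivity.
Qed.

Lemma target_root_unique x : is_root R x -> x = r0.
Proof.
  intros Rx. destruct (proj1_sig (h0 u x)) as [|e0 l] eqn:E using rev_ind.
  - exact (u_empty_addr E).
  - destruct (u_nonroot_step E) as [e [Ee _]]. exfalso. apply Rx. eauto.
Qed.

Lemma target_reaches_root x : clos_refl_trans _ (@sigma_step R) x r0.
Proof.
  remember (length (proj1_sig (h0 u x))) as n eqn:Len. revert x Len.
  induction n as [|n IH]; intros x Len;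
    destruct (proj1_sig (h0 u x)) as [|e0 l] eqn:E using rev_ind;
    try (rewrite (u_empty_addr E); apply rt_refl);
    rewrite length_app in Len; simpl in Len; [lia|].
  destruct (u_nonroot_step E) as [e [Ee El]]. eapply rt_trans.
  - apply rt_step. exists e. split; eauto.
  - apply IH. rewrite El. lia.
Qed.

(** Hence [R], isomorphic to [addr_poly image] via [u], is a tree. *)
Lemma target_is_tree : is_tree R.
Proof.
  pose proof (Addr0_finite image FR) as Fin0.
  split; [|split; [|split; [|split; [|split; [|split]]]]].
  - apply (finite_inj u0_inj Fin0).
  - apply (finite_inj u1_inj), (finite_inj (@addr_t_inj _ image) Fin0).
  - apply (finite_inj u2_inj), (finite_inj (@addr_s_inj _ image) Fin0).
  - intros b b' E. apply u1_inj, addr_t_inj.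
    change (pt (addr_poly image) (h1 u b) = pt (addr_poly image) (h1 u b')).
    rewrite !h_t, E. reflexivity.
  - intros e e' E. apply u2_inj, addr_s_inj.
    change (ps (addr_poly image) (h2 u e) = ps (addr_poly image) (h2 u e')).
    rewrite !h_s, E. reflexivity.
  - exists r0. split; [apply image_root | apply target_root_unique].
  - intros x r Rr. rewrite (target_root_unique Rr). apply target_reaches_root.
Qed.

(** Every node [b] of [R] occurs in [image], at the address [h1 u b]. *)
Lemma image_is_max : is_max_subtree image.
Proof.
  split; [apply wc_image|split].
  - unfold image. rewrite (proj2 (ext_wc g (proj1 Mmax))). apply image_root.
  - intros b. pose proof (proj2_sig (h1 u b)) as [ch H]. simpl in H.
    pose proof (proj1 (proj2 Hc) b) as E. simpl in E. apply at_addr_node_in in H. rewrite E in H. exact H.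
Qed.

End Converse.

Theorem generic_target_is_tree : forall (S R : PolyEnd), is_tree S -> finitary R ->
     forall g : Hom S (F R), generic g -> is_tree R /\ boundary_preserving g.
Proof.
  intros S R TS FR g Gen.
  destruct (tree_max_subtree TS) as [mu [Mmax Mcol]].
  pose proof TS as [_ [_ [_ [tinj [sinj [[r [_ Ru]] _]]]]]].
  destruct (Gen _ R (@addr_poly_finitary _ (image g mu) FR) FR (canon g tinj sinj Mmax Mcol)
              (addr_proj (wc_image g Mmax)) (id_hom R) (canon_factors g tinj sinj Mmax Mcol))
    as [u [Hc [Hf _]]].
  split; [exact (target_is_tree FR Hc Hf)|].
  intros t0 M0. replace t0 with mu; [exact (image_is_max Hc Hf)|].
  apply (max_unique tinj sinj Mmax M0). rewrite (Ru _ (proj1 (proj2 M0))). exact (Ru _ (proj1 (proj2 Mmax))).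
Qed.

Theorem mainTheorem17 :
  (forall (S T : PolyEnd), is_tree S -> is_tree T ->
     forall g : Hom S (F T), generic g <-> boundary_preserving g) /\
  (forall (S T : PolyEnd), is_tree S -> is_tree T ->
     forall g : Hom S (F T), boundary_preserving g -> generic g) /\
  (forall (S R : PolyEnd), is_tree S -> finitary R ->
     forall g : Hom S (F R), generic g -> is_tree R /\ boundary_preserving g).
Proof.
  split; [|split].
  - intros S T TS TT g. split.
    + intros G. exact (proj2 (generic_target_is_tree TS (tree_finitary TT) G)).
    + apply boundary_preserving_generic; auto.
  - exact boundary_preserving_generic.
  - exact generic_target_is_tree.
Qed.
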